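(* The family $\mathcal{P}_{gd}$ of good isomorphisms is cofinal in $\mathcal{P}$ (every $p\in\mathcal{P}$ is extended by some element of $\mathcal{P}_{gd}$). Furthermore, for every $\gamma\in\mathrm{Aut}(\mathbb{Q},<)$ the family $\mathcal{P}_{gd}\cap\mathcal{P}_\gamma$ is cofinal in $\mathcal{P}_\gamma$.
   Context: $\mathcal{P}$ is the set of finite partial isomorphisms of $(\mathbb{Q},<)$, ordered by extension. $\mathrm{Aut}(\mathbb{Q},<)$ carries the topology of pointwise convergence; $\mathcal{C}_\gamma$ is the closure of $\{\sigma\gamma\sigma^{-1}:\sigma\in\mathrm{Aut}(\mathbb{Q},<)\}$ and $\mathcal{P}_\gamma=\{p\in\mathcal{P}: p$ extends to an element of $\mathcal{C}_\gamma\}$. For $a\in\mathrm{Dom}(p)\cup\mathrm{Rng}(p)$, $\wp_p(a)$ is the sign ($+,0,-$) of $p(a)-a$ if $a\in\mathrm{Dom}(p)$, or of $a-p^{-1}(a)$ if $a\in\mathrm{Rng}(p)$. Elements $a,b$ are $p$-related if $a=b$, or if $\wp_p(a)=+$ or $\wp_p(b)=+$ and one of $a\le b\le p(a)$, $b\le a\le p(b)$, $p^{-1}(a)\le b\le a$, $p^{-1}(b)\le a\le b$ holds, or if $\wp_p(a)=-$ or $\wp_p(b)=-$ and one of $a\le b\le p^{-1}(a)$, $b\le a\le p^{-1}(b)$, $p(a)\le b\le a$, $p(b)\le a\le b$ holds (when defined). $\sim_p$ is the generated equivalence; classes meeting $\mathrm{Dom}(p)\cup\mathrm{Rng}(p)$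 are colored $p$-orbitals, with parity $\wp_p$, linearly ordered by $I\prec J$ iff every element of $I$ is below every element of $J$. A bad pair of $p$ is $a<a'$ in $\mathrm{Dom}(p)\cup\mathrm{Rng}(p)$ such that either the colored $p$-orbitals of $a,a'$ and all colored $p$-orbitals between them have parity $+$ and $p(a)$, $p^{-1}(a')$ are undefined, or they all have parity $-$ and $p(a')$, $p^{-1}(a)$ are undefined. $p$ is a good isomorphism ($p\in\mathcal{P}_{gd}$) if no colored $p$-orbital of parity $+$ or $-$ contains a bad pair, and any two colored $p$-orbitals of parities in $\{+,-\}$ which are neighbours in the ordering of colored $p$-orbitals have different parities. *)

From HB Require Import structures.
From mathcomp Require Import all_boot all_order all_algebra finmap.
From Stdlib Require Import Relation_Operators.
Set Implicit Arguments. Unset Strict Implicit. Unset Printing Implicit Defensive.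
Import Order.TTheory GRing.Theory Num.Theory.
Local Open Scope ring_scope.
Local Open Scope fmap_scope.

Definition qpmap := {fmap rat -> rat}.

Definition pisom (p : qpmap) : Prop :=
  forall a b c d, p.[? a] = Some c -> p.[? b] = Some d -> a < b -> c < d.

Definition extends (q p : qpmap) : Prop :=
  forall a c, p.[? a] = Some c -> q.[? a] = Some c.

Definition pinv (p : qpmap) (a : rat) : option rat :=
  omap val [pick x : domf p | p x == a].

Definition DR (p : qpmap) (a : rat) : Prop :=
  p.[? a] <> None \/ pinv p a <> None.

(* parity of a (1 for +, 0, -1 for -); 0 outside Dom u Rng (never used there) *)
Definition parity (p : qpmap) (a : rat) : rat :=
  match p.[? a] with
  | Some c => Num.sg (c - a)
  | None => match pinv p a with Some c => Num.sg (a - c) | None => 0 end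
  end.

Definition prel (p : qpmap) (a b : rat) : Prop :=
  a = b
  \/ ((parity p a = 1 \/ parity p b = 1) /\
      ((exists c, p.[? a] = Some c /\ a <= b <= c)
       \/ (exists c, p.[? b] = Some c /\ b <= a <= c)
       \/ (exists c, pinv p a = Some c /\ c <= b <= a)
       \/ (exists c, pinv p b = Some c /\ c <= a <= b)))
  \/ ((parity p a = -1 \/ parity p b = -1) /\
      ((exists c, pinv p a = Some c /\ a <= b <= c)
       \/ (exists c, pinv p b = Some c /\ b <= a <= c)
       \/ (exists c, p.[? a] = Some c /\ c <= b <= a)
       \/ (exists c, p.[? b] = Some c /\ c <= a <= b))).

Definition psim (p : qpmap) : rat -> rat -> Prop := clos_refl_sym_trans rat (prel p).

Definition oprec (p : qpmap) (a c : rat) : Prop :=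
  forall x y, psim p x a -> psim p y c -> x < y.

Definition opreceq (p : qpmap) (a c : rat) : Prop := psim p a c \/ oprec p a c.

(* (a, a') is a bad pair of p. The colored orbitals of a, a' and all colored
   orbitals in between are exactly the classes of the c in Dom u Rng with
   class(a) <= class(c) <= class(a'); "all have parity s" means every element
   of Dom u Rng in them has parity s. *)
Definition bad_pair (p : qpmap) (a a' : rat) : Prop :=
  DR p a /\ DR p a' /\ a < a' /\
  ( ((forall c, DR p c -> opreceq p a c -> opreceq p c a' -> parity p c = 1)
      /\ p.[? a] = None /\ pinv p a' = None)
  \/ ((forall c, DR p c -> opreceq p a c -> opreceq p c a' -> parity p c = -1)
      /\ p.[? a'] = None /\ pinv p a = None)).

Definition good (p : qpmap) : Prop :=
  pisom p
  /\ (* no colored orbital of parity + or - contains a bad pair *)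
  (forall a a', DR p a -> psim p a a' -> parity p a <> 0 -> ~ bad_pair p a a')
  /\ (* neighbouring colored orbitals of parities in {+,-} have different parities *)
  (forall a c, DR p a -> DR p c -> oprec p a c ->
     parity p a <> 0 -> parity p c <> 0 ->
     (~ exists d, DR p d /\ oprec p a d /\ oprec p d c) ->
     parity p a <> parity p c).

Definition is_aut (g : rat -> rat) : Prop :=
  bijective g /\ (forall x y, x < y -> g x < g y).

(* h lies in the closure C_gamma (in Aut(Q,<) with the pointwise convergence
   topology) of the conjugacy class of gamma: every basic neighbourhood
   {h' | h' = h on F}, F finite, meets the conjugacy class. *)
Definition in_conj_closure (gamma h : rat -> rat) : Prop :=
  is_aut h /\
  forall F : seq rat, exists sigma tau : rat -> rat,
    is_aut sigma /\ cancel sigma tau /\ cancel tau sigma /\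
    (forall x, x \in F -> sigma (gamma (tau x)) = h x).

Definition in_Pgamma (gamma : rat -> rat) (p : qpmap) : Prop :=
  pisom p /\
  exists h, in_conj_closure gamma h /\ (forall a c, p.[? a] = Some c -> h a = c).

(* Extend p to an automorphism c of (Q,<); for p in P_gamma the closure
   condition provides such a c conjugate to gamma.  Split the finite support of
   p into maximal runs of constant c-parity and complete each run to a single
   connected colored orbital: for parity + realize the run inside the
   translation x |-> x + 1, add the integer translates of its points lying
   between the extreme ones, and move this chain back by an automorphism;
   parity - is the same picture for c^-1, and a fixed point stays alone.  In
   such a block every point without image lies above every point without
   preimage, so there is no bad pair, and neighbouring runs have different
   parities, so the union of the blocks is good.  Each block embeds
   equivariantly into the corresponding orbital of c, hence the union lies in a
   conjugate of c, and so of gamma. *)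

From mathcomp Require Import all_boot all_order all_algebra finmap.
From mathcomp Require Import ring lra.
From Stdlib Require Import Relation_Operators.
Set Implicit Arguments. Unset Strict Implicit. Unset Printing Implicit Defensive.
Import Order.TTheory GRing.Theory Num.Theory.
Local Open Scope ring_scope.
Local Open Scope fmap_scope.

Definition maps (p : qpmap) a b := p.[? a] = Some b.

Lemma pinv_maps p a c : pinv p a = Some c -> maps p c a.
Proof. rewrite /pinv; case: pickP => //= x /eqP <- [<-]; by rewrite /maps -Some_fnd. Qed.

Lemma maps_pinv_neq p a c : maps p c a -> pinv p a <> None.
Proof.
rewrite /maps /pinv => h; case: pickP => [x _ //|].
have cin : c \in domf p by rewrite -fndSome h.
move=> /(_ [` cin]%fset) /=; rewrite (in_fnd cin) in h; case: h => ->.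
by rewrite eqxx.
Qed.

Lemma maps_fun p a b b' : maps p a b -> maps p a b' -> b = b'.
Proof. by rewrite /maps => -> []. Qed.

Lemma pisom_inj p a b c : pisom p -> maps p a c -> maps p b c -> a = b.
Proof.
move=> H Ea Eb; case: (ltgtP a b) => // h.
  by have := H _ _ _ _ Ea Eb h; rewrite ltxx.
by have := H _ _ _ _ Eb Ea h; rewrite ltxx.
Qed.

Lemma pinvP p a c : pisom p -> pinv p a = Some c <-> maps p c a.
Proof.
move=> H; split; first exact: pinv_maps.
move=> Ec; case h: (pinv p a) => [c'|]; last by have := maps_pinv_neq Ec; rewrite h.
by rewrite (pisom_inj H (pinv_maps h) Ec).
Qed.

Lemma pinv_eq p p' x : pisom p -> pisom p' -> (forall c, maps p' c x <-> maps p c x) ->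
  pinv p' x = pinv p x.
Proof.
move=> H H' HE; case h: (pinv p x) => [c|].
  by apply/(pinvP _ _ H'); apply/HE; apply/(pinvP _ _ H).
case h': (pinv p' x) => [c|] //.
by have := maps_pinv_neq (proj1 (HE c) (pinv_maps h')); rewrite h.
Qed.

Lemma DRP p a : DR p a <-> (exists b, maps p a b) \/ (exists b, maps p b a).
Proof.
rewrite /DR /maps; split.
  case=> h; [left|right]; move: h.
    by case: (p.[? a]) => [b _|//]; exists b.
  by case h: (pinv p a) => [b|//] _; exists b; apply: pinv_maps.
case=> [[b h]|[b h]]; [left|right]; first by rewrite h.
exact: maps_pinv_neq h.
Qed.

Lemma DR_dom p a b : maps p a b -> DR p a.
Proof. by move=> h; apply/DRP; left; exists b. Qed.

Lemma DR_rng p a b : maps p a b -> DR p b.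
Proof. by move=> h; apply/DRP; right; exists a. Qed.

Lemma DR_fmap0 x : ~ DR [fmap] x.
Proof. by move/DRP => [[b]|[b]]; rewrite /maps fnd_fmap0. Qed.

Definition fmap_of_pairs (s : seq (rat * rat)) : qpmap :=
  foldr (fun xy f => f.[xy.1 <- xy.2]) [fmap] s.

Lemma fmap_of_pairs_maps s a b : maps (fmap_of_pairs s) a b -> (a, b) \in s.
Proof.
rewrite /maps; elim: s => [|[x y] s IH] /=; first by rewrite fnd_fmap0.
rewrite fnd_set /=; case: eqP => [-> [<-]|_ h]; first by rewrite mem_head.
by rewrite in_cons IH ?orbT.
Qed.

Lemma maps_fmap_of_pairs s a b : (a, b) \in s ->
  (forall b', (a, b') \in s -> b' = b) -> maps (fmap_of_pairs s) a b.
Proof.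
rewrite /maps; elim: s => [//|[x y] s IH] /=.
rewrite in_cons fnd_set /= => hin hf.
case: eqP => [ex|nx].
  by rewrite -ex in hf *; rewrite (hf y) // mem_head.
case/orP: hin => [/eqP [ax _]|hin]; first by case: nx; rewrite ax.
by apply: IH => // b' hb; apply: hf; rewrite in_cons hb orbT.
Qed.

Definition graph_of (q : qpmap) : seq (rat * rat) := [seq (val k, q k) | k : domf q].

Lemma graph_ofP q a b : (a, b) \in graph_of q <-> maps q a b.
Proof.
rewrite /graph_of /maps; split.
  by case/mapP => k _ [-> ->]; rewrite -Some_fnd.
move=> h; have ain : a \in domf q by rewrite -fndSome h.
apply/mapP; exists [` ain]%fset; first by rewrite mem_enum.
by rewrite (in_fnd ain) in h; case: h => <-.
Qed.

(** * Parity and the relation [~_p] *)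

Definition between (u v z : rat) := (u <= z <= v) || (v <= z <= u).

Lemma betweenP u v z : between u v z <-> (u <= z /\ z <= v) \/ (v <= z /\ z <= u).
Proof.
rewrite /between; split; first by case/orP => /andP [h1 h2]; [left|right].
by move=> [[h1 h2]|[h1 h2]]; rewrite h1 h2 ?orbT.
Qed.

Lemma prel_maps_between p x y : prel p x y -> x = y \/ exists u v, maps p u v /\
  ((((x == u) || (x == v)) && between u v y) \/ (((y == u) || (y == v)) && between u v x)).
Proof.
rewrite /prel /between => H; case: H => [->|[[_ H]|[_ H]]]; first by left.
- right; case: H => [[c [h1 h2]]|[[c [h1 h2]]|[[c [h1 h2]]|[c [h1 h2]]]]].
  + by exists x, c; split => //; left; rewrite eqxx h2.
  + by exists y, c; split => //; right; rewrite eqxx h2.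
  + by exists c, x; split; [exact: pinv_maps|left; rewrite eqxx orbT h2].
  + by exists c, y; split; [exact: pinv_maps|right; rewrite eqxx orbT h2].
- right; case: H => [[c [h1 h2]]|[[c [h1 h2]]|[[c [h1 h2]]|[c [h1 h2]]]]].
  + by exists c, x; split; [exact: pinv_maps|left; rewrite eqxx orbT h2 orbT].
  + by exists c, y; split; [exact: pinv_maps|right; rewrite eqxx orbT h2 orbT].
  + by exists x, c; split => //; left; rewrite eqxx h2 orbT.
  + by exists y, c; split => //; right; rewrite eqxx h2 orbT.
Qed.

Lemma between_side w u v z : (w < u) = (w < v) -> between u v z -> (w < z) = (w < u).
Proof.
move=> huv /betweenP hb; case: (ltP w u) huv => hu /esym hv.
  by apply/idP; case: hb => [[h1 h2]|[h1 h2]]; lra.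
apply/negbTE; rewrite -leNgt; move/negbT: hv; rewrite -leNgt => hv.
by case: hb => [[h1 h2]|[h1 h2]]; lra.
Qed.

Lemma psim_side p w : (forall u v, maps p u v -> (w < u) = (w < v)) ->
  forall x y, psim p x y -> (w < x) = (w < y).
Proof.
move=> H x y; elim => {x y} [x y hp| x | x y _ -> | x y z _ -> _ ->] //.
case: (prel_maps_between hp) => [->//|[u [v [Euv [/andP [hx hb]| /andP [hy hb]]]]]].
- have Huv := H _ _ Euv; rewrite (between_side Huv hb).
  by case/orP: hx => /eqP ->.
- have Huv := H _ _ Euv; rewrite (between_side Huv hb).
  by case/orP: hy => /eqP ->.
Qed.

Lemma sg_maps_maps p a b c : pisom p -> maps p a c -> maps p b a ->
  Num.sg (c - a) = Num.sg (a - b).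
Proof.
move=> H Ea Eb; case: (ltgtP a b) => h.
- have := H _ _ _ _ Ea Eb h => h2.
  by rewrite !ltr0_sg // subr_lt0.
- have := H _ _ _ _ Eb Ea h => h2.
  by rewrite !gtr0_sg // subr_gt0.
- by subst b; rewrite (maps_fun Ea Eb) subrr.
Qed.

Lemma parity_dom p a b : maps p a b -> parity p a = Num.sg (b - a).
Proof. by rewrite /parity /maps => ->. Qed.

Lemma parity_rng p a b : pisom p -> maps p b a -> parity p a = Num.sg (a - b).
Proof.
move=> H Eb; rewrite /parity; case h: (p.[? a]) => [c|].
  exact: (sg_maps_maps H h Eb).
by rewrite (proj2 (pinvP a b H) Eb).
Qed.

Lemma parity_neq0_DR p a : parity p a <> 0 -> DR p a.
Proof.
move=> h; rewrite /DR; case e: (p.[? a]) => [c|]; first by left.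
case e': (pinv p a) => [c|]; first by right.
by move: h; rewrite /parity e e'.
Qed.

Lemma parity_pos q x : pisom q -> (forall a b, maps q a b -> a < b) -> DR q x ->
  parity q x = 1.
Proof.
move=> H P /DRP [[b h]|[a h]].
  by rewrite (parity_dom h); apply: gtr0_sg; rewrite subr_gt0; apply: P.
by rewrite (parity_rng H h); apply: gtr0_sg; rewrite subr_gt0; apply: P.
Qed.

Lemma prel_maps_up p a b z : maps p a b -> a < b -> a <= z <= b -> prel p a z.
Proof.
move=> Eab ab hz; right; left; split; last by left; exists b.
by left; rewrite (parity_dom Eab) gtr0_sg // subr_gt0.
Qed.

Lemma prel_maps_down p a b z : maps p a b -> b < a -> b <= z <= a -> prel p a z.
Proof.
move=> Eab ab hz; right; right; split; last by right; right; left; exists b.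
by left; rewrite (parity_dom Eab) ltr0_sg // subr_lt0.
Qed.

Lemma prel_maps p a b : maps p a b -> prel p a b.
Proof.
move=> Eab; case: (ltgtP a b) => h; last by left.
- by apply: (prel_maps_up Eab) => //; rewrite lexx ltW.
- by apply: (prel_maps_down Eab) => //; rewrite lexx ltW.
Qed.

Definition agree_on (p p' : qpmap) :=
  forall x, DR p x -> p'.[? x] = p.[? x] /\ pinv p' x = pinv p x.

Lemma parity_agree p p' x : agree_on p p' -> DR p x -> parity p' x = parity p x.
Proof. by move=> A /A [h1 h2]; rewrite /parity h1 h2. Qed.

Lemma prel_agree p p' x y : agree_on p p' -> prel p x y -> prel p' x y.
Proof.
move=> A.
have par s z : s <> 0 -> parity p z = s -> parity p' z = s.
  by move=> s0 hz; rewrite (parity_agree A) //; apply: parity_neq0_DR; rewrite hz.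
have fnd z c : p.[? z] = Some c -> p'.[? z] = Some c.
  by move=> h; have [|-> _] := A z; first by left; rewrite h.
have inv z c : pinv p z = Some c -> pinv p' z = Some c.
  by move=> h; have [|_ ->] := A z; first by right; rewrite h.
have o1 : (1 : rat) <> 0 by []; have o2 : (-1 : rat) <> 0 by [].
case=> [->|[[hp H]|[hp H]]]; [by left| right; left | right; right]; split.
- by case: hp => h; [left|right]; apply: par h.
- case: H => [[c [h1 h2]]|[[c [h1 h2]]|[[c [h1 h2]]|[c [h1 h2]]]]].
  + by left; exists c; rewrite (fnd _ _ h1).
  + by right; left; exists c; rewrite (fnd _ _ h1).
  + by right; right; left; exists c; rewrite (inv _ _ h1).
  + by right; right; right; exists c; rewrite (inv _ _ h1).
- by case: hp => h; [left|right]; apply: par h.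
- case: H => [[c [h1 h2]]|[[c [h1 h2]]|[[c [h1 h2]]|[c [h1 h2]]]]].
  + by left; exists c; rewrite (inv _ _ h1).
  + by right; left; exists c; rewrite (inv _ _ h1).
  + by right; right; left; exists c; rewrite (fnd _ _ h1).
  + by right; right; right; exists c; rewrite (fnd _ _ h1).
Qed.

Lemma psim_agree p p' x y : agree_on p p' -> psim p x y -> psim p' x y.
Proof.
move=> A; elim => {x y} [x y h|x|x y _ h|x y z _ h1 _ h2].
- exact/rst_step/(prel_agree A).
- exact: rst_refl.
- exact: rst_sym.
- exact: rst_trans h1 h2.
Qed.

Definition fmap_inv (q : qpmap) : qpmap := fmap_of_pairs [seq (xy.2, xy.1) | xy <- graph_of q].

Lemma maps_fmap_inv q a b : pisom q -> maps (fmap_inv q) a b <-> maps q b a.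
Proof.
move=> H; split.
  by move/fmap_of_pairs_maps/mapP => [[x y] /graph_ofP h [-> ->]].
move=> h; apply: maps_fmap_of_pairs.
  by apply/mapP; exists (b, a) => //; apply/graph_ofP.
move=> b' /mapP [[x y] /graph_ofP h2 [ey ex]]; subst.
exact: (pisom_inj H h2 h).
Qed.

Lemma fmap_inv_pisom q : pisom q -> pisom (fmap_inv q).
Proof.
move=> H a b c d /(maps_fmap_inv _ _ H) Ea /(maps_fmap_inv _ _ H) Eb ab.
case: (ltgtP c d) => // h.
- by have := H _ _ _ _ Eb Ea h; rewrite ltNge (ltW ab).
- by subst d; have := maps_fun Ea Eb => e; rewrite e ltxx in ab.
Qed.

Lemma fnd_fmap_inv q a : pisom q -> (fmap_inv q).[? a] = pinv q a.
Proof.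
move=> H; case h: (pinv q a) => [c|].
  by apply/(maps_fmap_inv _ _ H); apply/(pinvP _ _ H).
case h2: ((fmap_inv q).[? a]) => [c|] //.
by have := maps_pinv_neq (proj1 (maps_fmap_inv _ _ H) h2); rewrite h.
Qed.

Lemma pinv_fmap_inv q a : pisom q -> pinv (fmap_inv q) a = q.[? a].
Proof.
move=> H; have Hi := fmap_inv_pisom H.
case h: (q.[? a]) => [c|].
  by apply/(pinvP _ _ Hi); apply/(maps_fmap_inv _ _ H).
case h2: (pinv (fmap_inv q) a) => [c|] //.
by have := proj1 (maps_fmap_inv _ _ H) (pinv_maps h2); rewrite /maps h.
Qed.

Lemma DR_fmap_inv q x : pisom q -> DR (fmap_inv q) x <-> DR q x.
Proof. by move=> H; rewrite /DR fnd_fmap_inv // pinv_fmap_inv //; tauto. Qed.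

Lemma parity_fmap_inv q x : pisom q -> parity (fmap_inv q) x = - parity q x.
Proof.
move=> H; rewrite /parity fnd_fmap_inv // pinv_fmap_inv //.
case h1: (q.[? x]) => [c1|]; case h2: (pinv q x) => [c2|]; rewrite ?oppr0 //.
- by rewrite (sg_maps_maps H h1 (pinv_maps h2)) -sgrN opprB.
- by rewrite -sgrN opprB.
- by rewrite -sgrN opprB.
Qed.

Lemma prel_fmap_inv q x y : pisom q -> prel (fmap_inv q) x y -> prel q x y.
Proof.
move=> H; rewrite /prel !parity_fmap_inv // !fnd_fmap_inv // !pinv_fmap_inv //.
have e1 z : - parity q z = 1 -> parity q z = -1 by move=> h; rewrite -[parity q z]opprK h.
have e2 z : - parity q z = -1 -> parity q z = 1 by move=> h; rewrite -[parity q z]opprK h.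
case=> [->|[[hp H1]|[hp H1]]]; [by left| |].
- by right; right; split; [case: hp => h; [left|right]; apply: e1 | tauto].
- by right; left; split; [case: hp => h; [left|right]; apply: e2 | tauto].
Qed.

Lemma fmap_invK q : pisom q -> fmap_inv (fmap_inv q) = q.
Proof.
move=> H; apply/fmapP => a.
by rewrite fnd_fmap_inv ?pinv_fmap_inv //; apply: fmap_inv_pisom.
Qed.

Lemma psim_fmap_inv q x y : pisom q -> psim (fmap_inv q) x y <-> psim q x y.
Proof.
move=> H.
have prel_inv' u v : prel q u v -> prel (fmap_inv q) u v.
  by rewrite -{1}(fmap_invK H); apply/prel_fmap_inv/fmap_inv_pisom.
split; elim => {x y} [x y h|x|x y _ h|x y z _ h1 _ h2].
- exact/rst_step/prel_fmap_inv.
- exact: rst_refl.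
- exact: rst_sym.
- exact: rst_trans h1 h2.
- exact/rst_step/prel_inv'.
- exact: rst_refl.
- exact: rst_sym.
- exact: rst_trans h1 h2.
Qed.

(* [blk] numbers the colored orbitals of [q] from left to right. *)
Lemma good_of_index q (blk : rat -> nat) :
  pisom q ->
  {homo blk : x y / x <= y >-> (x <= y)%N} ->
  (forall x y, psim q x y -> blk x = blk y) ->
  (forall x y, DR q x -> DR q y -> blk x = blk y -> psim q x y) ->
  (forall a a', DR q a -> DR q a' -> blk a = blk a' -> parity q a = 1 ->
     q.[? a] = None -> pinv q a' = None -> a' <= a) ->
  (forall a a', DR q a -> DR q a' -> blk a = blk a' -> parity q a = -1 ->
     q.[? a'] = None -> pinv q a = None -> a' <= a) ->
  (forall x y, DR q x -> DR q y -> (blk x < blk y)%N -> parity q x <> 0 ->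
     parity q x = parity q y ->
     exists d, DR q d /\ (blk x < blk d)%N /\ (blk d < blk y)%N) ->
  good q.
Proof.
move=> Hiso M Hinv Hcl Hp Hn Hnb.
have lt_of_blk x y : (blk x < blk y)%N -> x < y.
  by move=> h; rewrite ltNge; apply/negP => /M h2; move: (leq_ltn_trans h2 h); rewrite ltnn.
split => //; split.
- move=> a a' Da Sa nz [_ [Da' [aa' H]]].
  have Ba := Hinv _ _ Sa.
  have oa : opreceq q a a by left; apply: rst_refl.
  have oa' : opreceq q a a' by left.
  case: H => [[Hc [h1 h2]]|[Hc [h1 h2]]].
  + by have := Hp _ _ Da Da' Ba (Hc _ Da oa oa') h1 h2; rewrite leNgt aa'.
  + by have := Hn _ _ Da Da' Ba (Hc _ Da oa oa') h1 h2; rewrite leNgt aa'.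
- move=> a c Da Dc oac nza nzc nod eqp.
  have ac : a < c by apply: oac; apply: rst_refl.
  have le := M _ _ (ltW ac).
  case: (ltngtP (blk a) (blk c)) => hb.
  + have [d [Dd [h1 h2]]] := Hnb _ _ Da Dc hb nza eqp.
    apply: nod; exists d; split => //; split => x y hx hy; apply: lt_of_blk.
    * by rewrite (Hinv _ _ hx) (Hinv _ _ hy).
    * by rewrite (Hinv _ _ hx) (Hinv _ _ hy).
  + by move: (leq_ltn_trans le hb); rewrite ltnn.
  + by have := oac a a (rst_refl _ _ _) (Hcl _ _ Da Dc hb); rewrite ltxx.
Qed.

Definition cut_index (ws : seq rat) (x : rat) : nat := count (fun w => w < x) ws.

Lemma cut_index_homo ws : {homo cut_index ws : x y / x <= y >-> (x <= y)%N}.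
Proof. by move=> x y xy; apply: sub_count => w /= h; apply: lt_le_trans xy. Qed.

Lemma cut_index_psim q ws :
  (forall w, w \in ws -> forall u v, maps q u v -> (w < u) = (w < v)) ->
  forall x y, psim q x y -> cut_index ws x = cut_index ws y.
Proof.
move=> H x y hs; apply: eq_in_count => w hw /=.
exact: (psim_side (H w hw) hs).
Qed.

Lemma cut_index_le_size ws x : (cut_index ws x <= size ws)%N.
Proof. exact: count_size. Qed.

Lemma cut_index_rcons ws w x :
  cut_index (rcons ws w) x = (cut_index ws x + ((w < x)%R : bool))%N.
Proof. by rewrite /cut_index -cats1 count_cat /= addn0. Qed.

Lemma cut_index_all ws x : (forall w, w \in ws -> w < x) -> cut_index ws x = size ws.
Proof. by move=> H; apply/eqP; rewrite -all_count; apply/allP. Qed.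

Lemma exists_seq_max (T : eqType) (s : seq T) (f : T -> rat) : s <> [::] ->
  exists x, x \in s /\ forall y, y \in s -> f y <= f x.
Proof.
elim: s => [//|a s IH] _.
case: s IH => [|b s] IH.
  by exists a; split; [rewrite mem_head|move=> y; rewrite inE => /eqP ->].
have [x [hx H]] := IH ltac:(by []).
case: (leP (f a) (f x)) => h.
  exists x; split; first by rewrite in_cons hx orbT.
  by move=> y; rewrite in_cons => /orP [/eqP ->|/H].
exists a; split; first by rewrite mem_head.
by move=> y; rewrite in_cons => /orP [/eqP ->//|/H /le_trans]; apply; apply: ltW.
Qed.

Lemma exists_seq_min (T : eqType) (s : seq T) (f : T -> rat) : s <> [::] ->
  exists x, x \in s /\ forall y, y \in s -> f x <= f y.
Proof.
move=> h; have [x [hx H]] := exists_seq_max (fun y => - f y) h.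
by exists x; split => // y /H; rewrite lerN2.
Qed.

(** * Extending finite order-isomorphisms to automorphisms *)

(* The piecewise linear automorphism sending [c] to [d], fixing everything
   outside [(a, b)] (an absent bound means no restriction on that side). *)
Definition bump (al be : option rat) (c d x : rat) : rat :=
  if x <= c then
    (if al is Some a then (if x <= a then x else a + (x - a) * ((d - a) / (c - a)))
     else x + (d - c))
  else
    (if be is Some b then (if b <= x then x else b - (b - x) * ((b - d) / (b - c)))
     else x + (d - c)).

Definition bump_bounds (al be : option rat) (c d : rat) :=
  (forall a, al = Some a -> a < c /\ a < d) /\ (forall b, be = Some b -> c < b /\ d < b).

Section Bump.
Variables (al be : option rat) (c d : rat).
Hypothesis V : bump_bounds al be c d.

Lemma bump_le (x : rat) : x <= c -> bump al be c d x <= d.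
Proof.
case: V => [h1 _] xc; rewrite /bump xc.
case: al h1 => [a|] h1; last lra.
have [ac ad] := h1 a erefl.
case: ifP => xa; first lra.
have k0 : 0 < (d - a) / (c - a) by apply: divr_gt0; lra.
have kc : (c - a) * ((d - a) / (c - a)) = d - a by field; lra.
set k := (d - a) / (c - a) in k0 kc *; clearbody k.
have : 0 <= (c - x) * k by apply: mulr_ge0; lra.
lra.
Qed.

Lemma bump_gt (x : rat) : c < x -> d < bump al be c d x.
Proof.
case: V => [_ h2] xc; rewrite /bump ifF; last by apply/negbTE; rewrite -ltNge.
case: be h2 => [b|] h2; last lra.
have [cb db] := h2 b erefl.
case: ifP => xb; first lra.
have k0 : 0 < (b - d) / (b - c) by apply: divr_gt0; lra.
have kc : (b - c) * ((b - d) / (b - c)) = b - d by field; lra.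
set k := (b - d) / (b - c) in k0 kc *; clearbody k.
move/negbT: xb; rewrite -ltNge => xb.
have : 0 < (x - c) * k by apply: mulr_gt0; lra.
lra.
Qed.

Lemma bump_homo : {homo bump al be c d : x y / x < y}.
Proof.
move=> x y xy.
case: (leP x c) => xc; case: (leP y c) => yc; last 2 first.
- lra.
- move: (V) => [_ h2]; rewrite /bump ifF; last by apply/negbTE; rewrite -ltNge.
  rewrite ifF; last by apply/negbTE; rewrite -ltNge.
  case: be h2 => [b|] h2; last lra.
  have [cb db] := h2 b erefl.
  have k0 : 0 < (b - d) / (b - c) by apply: divr_gt0; lra.
  set k := (b - d) / (b - c) in k0 *; clearbody k.
  have f1 : 0 < (y - x) * k by apply: mulr_gt0; lra.
  case: ifP => xb; case: ifP => yb; try lra.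
  have : 0 < (b - x) * k by apply: mulr_gt0; move/negbT: xb; rewrite -ltNge; lra.
  lra.
- move: (V) => [h1 _]; rewrite /bump xc yc.
  case: al h1 => [a|] h1; last lra.
  have [ac ad] := h1 a erefl.
  have k0 : 0 < (d - a) / (c - a) by apply: divr_gt0; lra.
  set k := (d - a) / (c - a) in k0 *; clearbody k.
  have f1 : 0 < (y - x) * k by apply: mulr_gt0; lra.
  case: ifP => xa; case: ifP => ya; try lra.
  have : 0 < (y - a) * k by apply: mulr_gt0; move/negbT: ya; rewrite -ltNge; lra.
  lra.
- by have := bump_le xc; have := bump_gt yc; lra.
Qed.

Lemma bump_center : bump al be c d c = d.
Proof.
case: V => [h1 _]; rewrite /bump lexx.
case: al h1 => [a|] h1; last lra.
have [ac ad] := h1 a erefl; rewrite ifF; last by apply/negbTE; rewrite -ltNge.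
field; lra.
Qed.

Lemma bumpK : cancel (bump al be c d) (bump al be d c).
Proof.
move=> x; case: (leP x c) => xc.
- rewrite {1}/bump (bump_le xc) /=; move: (V) => [h1 _]; rewrite /bump xc /=.
  case: al h1 => [a|] h1; last lra.
  have [ac ad] := h1 a erefl.
  case: (leP x a) => xa /=; first by rewrite xa.
  have k0 : 0 < (d - a) / (c - a) by apply: divr_gt0; lra.
  rewrite ifF; last first.
    apply/negbTE; rewrite -ltNge.
    have : 0 < (x - a) * ((d - a) / (c - a)) by apply: mulr_gt0; lra.
    lra.
  field; lra.
- rewrite {1}/bump ifF; last by apply/negbTE; rewrite -ltNge; apply: bump_gt.
  move: (V) => [_ h2]; rewrite /bump ifF; last by apply/negbTE; rewrite -ltNge.
  case: be h2 => [b|] h2; last lra.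
  have [cb db] := h2 b erefl.
  case: (leP b x) => xb /=; first by rewrite xb.
  have k0 : 0 < (b - d) / (b - c) by apply: divr_gt0; lra.
  rewrite ifF; last first.
    apply/negbTE; rewrite -ltNge.
    have : 0 < (b - x) * ((b - d) / (b - c)) by apply: mulr_gt0; lra.
    lra.
  field; lra.
Qed.

Lemma bump_id_le (a x : rat) : al = Some a -> x <= a -> bump al be c d x = x.
Proof.
move=> ea xa; have [ac _] := V.1 a ea.
by rewrite /bump ifT ?ea ?xa //; apply: le_trans xa (ltW ac).
Qed.

Lemma bump_id_ge (b x : rat) : be = Some b -> b <= x -> bump al be c d x = x.
Proof.
move=> eb xb; have [cb _] := V.2 b eb.
by rewrite /bump ifF ?eb ?xb //; apply/negbTE; rewrite -ltNge; apply: lt_le_trans xb.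
Qed.

End Bump.

Lemma bump_bounds_sym al be c d : bump_bounds al be c d -> bump_bounds al be d c.
Proof. by case=> h1 h2; split => [a /h1|b /h2] []. Qed.

Lemma exists_opt_max (t : seq rat) : exists al : option rat,
  (forall y, y \in t -> exists a, al = Some a /\ y <= a) /\ (forall a, al = Some a -> a \in t).
Proof.
have [->|ne] := eqVneq t [::]; first by exists None.
have [m [hm Hm]] := @exists_seq_max _ t id (ltac:(by apply/eqP)).
by exists (Some m); split => [y /Hm|a [<-]] //; exists m.
Qed.

Lemma exists_opt_min (t : seq rat) : exists be : option rat,
  (forall y, y \in t -> exists b, be = Some b /\ b <= y) /\ (forall b, be = Some b -> b \in t).
Proof.
have [->|ne] := eqVneq t [::]; first by exists None.
have [m [hm Hm]] := @exists_seq_min _ t id (ltac:(by apply/eqP)).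
by exists (Some m); split => [y /Hm|a [<-]] //; exists m.
Qed.

Definition ord_pairs (s : seq (rat * rat)) :=
  forall a b a' b', (a, b) \in s -> (a', b') \in s -> (a < a' -> b < b') /\ (a = a' -> b = b').

Lemma ord_pairsW s t : {subset s <= t} -> ord_pairs t -> ord_pairs s.
Proof. by move=> st H a b a' b' /st h /st h'; apply: H. Qed.

Lemma ord_pairs_strict (s : seq (rat * rat)) :
  (forall a b a' b', (a, b) \in s -> (a', b') \in s -> a < a' -> b < b') ->
  (forall a b a' b', (a, b) \in s -> (a', b') \in s -> b < b' -> a < a') ->
  ord_pairs s.
Proof.
move=> H1 H2 a b a' b' h h'; split; first exact: H1.
move=> e; subst a'; case: (ltgtP b b') => // hb.
- by have := H2 _ _ _ _ h h' hb; rewrite ltxx.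
- by have := H2 _ _ _ _ h' h hb; rewrite ltxx.
Qed.

Lemma graph_of_ord_pairs p : pisom p -> ord_pairs (graph_of p).
Proof.
move=> H a b a' b' /graph_ofP h /graph_ofP h'; split; first exact: H h h'.
by move=> e; subst a'; apply: maps_fun h h'.
Qed.

Lemma ord_pairs_extend (s : seq (rat * rat)) : ord_pairs s ->
  exists rho rhoi, [/\ cancel rho rhoi, cancel rhoi rho, {homo rho : x y / x < y}
    & forall a b, (a, b) \in s -> rho a = b].
Proof.
elim: s => [|[u v] s IH] H; first by exists id, id; split.
have Huv : (u, v) \in (u, v) :: s by rewrite mem_head.
have [r [ri [K1 K2 I Ext]]] := IH (ord_pairsW (fun xy h => mem_behead h) H).
have sub xy : xy \in s -> xy \in (u, v) :: s by move=> h; rewrite in_cons h orbT.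
(* squeeze [r u] onto [v] between the images of the neighbours of [u] *)
have [al [Hal Hal']] := exists_opt_max [seq xy.2 | xy <- s & xy.1 < u].
have [be [Hbe Hbe']] := exists_opt_min [seq xy.2 | xy <- s & u < xy.1].
have V : bump_bounds al be (r u) v.
  split.
  - move=> a /Hal' /mapP [[x y]]; rewrite mem_filter /= => /andP [xu hs] ->.
    by split; [rewrite -(Ext _ _ hs); apply: I | apply: (H _ _ _ _ (sub _ hs) Huv).1].
  - move=> b /Hbe' /mapP [[x y]]; rewrite mem_filter /= => /andP [ux hs] ->.
    by split; [rewrite -(Ext _ _ hs); apply: I | apply: (H _ _ _ _ Huv (sub _ hs)).1].
exists (bump al be (r u) v \o r), (ri \o bump al be v (r u)); split.
- by move=> x /=; rewrite bumpK // K1.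
- by move=> x /=; rewrite K2 (bumpK (bump_bounds_sym V)).
- by move=> x y xy /=; apply: (bump_homo V); apply: I.
move=> a b; rewrite in_cons => /orP [/eqP [-> ->]|hs] /=; first exact: bump_center.
rewrite (Ext _ _ hs); case: (ltgtP a u) => au.
- have [x [ex bx]] : exists x, al = Some x /\ b <= x.
    by apply: Hal; apply/mapP; exists (a, b); rewrite // mem_filter au.
  exact: (bump_id_le V ex bx).
- have [x [ex bx]] : exists x, be = Some x /\ x <= b.
    by apply: Hbe; apply/mapP; exists (a, b); rewrite // mem_filter au.
  exact: (bump_id_ge V ex bx).
- subst a; have e := (H _ _ _ _ (sub _ hs) Huv).2 erefl; subst b.
  by rewrite -{2}(Ext _ _ hs) bump_center.
Qed.

(** * Equivariant realizations *)

Definition in_supp (s : seq (rat * rat)) x :=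
  (exists b, (x, b) \in s) \/ (exists a, (a, x) \in s).

Definition supp (s : seq (rat * rat)) := [seq xy.1 | xy <- s] ++ [seq xy.2 | xy <- s].

Lemma mem_supp s x : x \in supp s <-> in_supp s x.
Proof.
rewrite /supp mem_cat; split.
  by case/orP => /mapP [[a b] h /= ->]; [left; exists b|right; exists a].
case=> [[b h]|[a h]]; apply/orP; [left|right]; apply/mapP; by [exists (x, b)|exists (a, x)].
Qed.

Lemma in_supp_DR s q x : (forall a b, (a, b) \in s -> maps q a b) -> in_supp s x -> DR q x.
Proof. by move=> H [[b /H h]|[a /H h]]; [apply: DR_dom h|apply: DR_rng h]. Qed.

Definition convex (O : rat -> Prop) := forall x y z, O x -> O z -> x <= y <= z -> O y.

Section ConvexUnbounded.
Variables (O : rat -> Prop) (o : rat).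
Hypotheses (convO : convex O) (Oo : O o).
Hypotheses (O_down : forall x, O x -> exists z, O z /\ z < x)
           (O_up : forall x, O x -> exists z, O z /\ x < z).

Lemma convex_gap (lo hi : seq rat) :
  (forall x, x \in lo -> O x) -> (forall x, x \in hi -> O x) ->
  (forall x y, x \in lo -> y \in hi -> x < y) ->
  exists y, O y /\ (forall x, x \in lo -> x < y) /\ (forall x, x \in hi -> y < x).
Proof.
move=> Olo Ohi Hlh.
have [el|nl] := eqVneq lo [::]; have [eh|nh] := eqVneq hi [::].
- by exists o; rewrite el eh; split => //; split => x; rewrite in_nil.
- have [m [hm Hm]] := @exists_seq_min _ hi id (ltac:(by apply/eqP)).
  have [z [Oz zm]] := O_down (Ohi _ hm).
  exists z; rewrite el; split => //; split => [x|x /Hm /=]; first by rewrite in_nil.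
  exact: lt_le_trans zm.
- have [m [hm Hm]] := @exists_seq_max _ lo id (ltac:(by apply/eqP)).
  have [z [Oz zm]] := O_up (Olo _ hm).
  exists z; rewrite eh; split => //; split => [x /Hm /=|x]; last by rewrite in_nil.
  by move/le_lt_trans; apply.
- have [m [hm Hm]] := @exists_seq_max _ lo id (ltac:(by apply/eqP)).
  have [m' [hm' Hm']] := @exists_seq_min _ hi id (ltac:(by apply/eqP)).
  have mm := Hlh _ _ hm hm'.
  exists ((m + m') / 2); split.
    by apply: (convO (Olo _ hm) (Ohi _ hm')); apply/andP; split; lra.
  by split => x hx; [have := Hm _ hx|have := Hm' _ hx] => /=; lra.
Qed.

Lemma convex_extend_point (D : seq rat) (pi : rat -> rat) u :
  {in D &, {homo pi : x y / x < y}} -> {in D, forall x, O (pi x)} ->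
  exists y, [/\ O y, u \in D -> y = pi u
    & forall x, x \in D -> (x < u -> pi x < y) /\ (u < x -> y < pi x)].
Proof.
move=> Hpi OD; have [uD|uD] := boolP (u \in D).
  by exists (pi u); split => [|//|x xD]; [apply: OD|split => h; apply: Hpi].
have [|||y [Oy [H1 H2]]] := convex_gap (lo := [seq pi x | x <- D & x < u])
    (hi := [seq pi x | x <- D & u < x]).
- by move=> z /mapP [x]; rewrite mem_filter => /andP [_ /OD ? ->].
- by move=> z /mapP [x]; rewrite mem_filter => /andP [_ /OD ? ->].
- move=> z z' /mapP [x]; rewrite mem_filter => /andP [h1 h2] ->.
  move=> /mapP [x']; rewrite mem_filter => /andP [h1' h2'] ->.
  by apply: Hpi => //; apply: lt_trans h1'.
exists y; split => // x xD; split => h.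
  by apply: H1; apply/mapP; exists x; rewrite // mem_filter h.
by apply: H2; apply/mapP; exists x; rewrite // mem_filter h.
Qed.

End ConvexUnbounded.

Definition realizes (g : rat -> rat) (O : rat -> Prop) (s : seq (rat * rat)) (pi : rat -> rat) :=
  [/\ forall x y, in_supp s x -> in_supp s y -> x < y -> pi x < pi y,
      forall x, in_supp s x -> O (pi x)
    & forall a b, (a, b) \in s -> pi b = g (pi a)].

Lemma remove_top_pair s s' u m : ord_pairs s -> (forall a b, (a, b) \in s -> a < b) ->
  (u, m) \in s -> (forall xy, xy \in s -> xy.2 <= m) ->
  (forall a b, ((a, b) \in s') = ((a, b) \in s) && (a != u)) ->
  [/\ forall b, (u, b) \in s -> b = m, forall x b, (x, b) \in s' -> x < u,
      forall x, in_supp s' x -> x < m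
    & forall x, in_supp s x -> [\/ x = u, x = m | in_supp s' x]].
Proof.
move=> Hs Hpos hum Hum mem_s'.
have ss' a b : (a, b) \in s' -> (a, b) \in s by rewrite mem_s' => /andP [].
have fun_u b : (u, b) \in s -> b = m by move=> h; apply: (Hs _ _ _ _ h hum).2.
have lt_u x b : (x, b) \in s' -> x < u.
  rewrite mem_s' => /andP [h xu]; case: (ltgtP x u) => // h2; last by rewrite h2 eqxx in xu.
  by have := (Hs _ _ _ _ hum h).1 h2; have := Hum _ h; rewrite /= leNgt => /negP.
split => //.
- move=> x [[b h]|[a h]]; last by apply: (Hs _ _ _ _ (ss' _ _ h) hum).1; apply: lt_u h.
  by apply: lt_le_trans (Hum _ (ss' _ _ h)); apply: Hpos (ss' _ _ h).
- move=> x [[b h]|[a h]]; have [->|xu] := eqVneq x u; try by constructor 1.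
  + by constructor 3; left; exists b; rewrite mem_s' h xu.
  + case: (eqVneq a u) h => [->|au] h; first by rewrite (fun_u _ h); constructor 2.
    by constructor 3; right; exists a; rewrite mem_s' h au.
Qed.

Lemma size_filter_lt (T : eqType) (P : pred T) (s : seq T) x :
  x \in s -> ~~ P x -> (size (filter P s) < size s)%N.
Proof.
move=> xs Px; rewrite size_filter -(count_predC P s) -[X in (X < _)%N]addn0 ltn_add2l.
by rewrite -has_count; apply/hasP; exists x.
Qed.

Section Realize.
Variables (g gi : rat -> rat) (O : rat -> Prop) (o : rat).
Hypotheses (K2 : cancel gi g) (Ig : {homo g : x y / x < y}).
Hypotheses (convO : convex O) (Og : forall x, O x -> O (g x)) (Ogi : forall x, O x -> O (gi x)).
Hypotheses (Opos : forall x, O x -> x < g x) (Oo : O o).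

Let O_down x : O x -> exists z, O z /\ z < x.
Proof. by move=> Ox; exists (gi x); split; [apply: Ogi|rewrite -{2}(K2 x); apply/Opos/Ogi]. Qed.

Let O_up x : O x -> exists z, O z /\ x < z.
Proof. by move=> Ox; exists (g x); split; [apply: Og|apply: Opos]. Qed.

(* Put [u] at a point [y] of [O] in the right position and [m] at [g y]. *)
Lemma realizes_top_pair s s' u m pi' : ord_pairs s -> (forall a b, (a, b) \in s -> a < b) ->
  (u, m) \in s -> (forall xy, xy \in s -> xy.2 <= m) ->
  (forall a b, ((a, b) \in s') = ((a, b) \in s) && (a != u)) ->
  realizes g O s' pi' -> exists pi, realizes g O s pi.
Proof.
move=> Hs Hpos hum Hum mem_s' [P1 P2 P3].
have [fun_u lt_u supp_lt_m supp_s] := remove_top_pair Hs Hpos hum Hum mem_s'.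
have um : u < m by apply: Hpos.
have [y [Oy Hyu Hy]] := convex_extend_point convO Oo O_down O_up u
  (D := supp s') (pi := pi')
  (fun x z hx hz => P1 x z (proj1 (mem_supp _ _) hx) (proj1 (mem_supp _ _) hz))
  (fun x hx => P2 x (proj1 (mem_supp _ _) hx)).
have below_gy x : in_supp s' x -> pi' x < g y.
  move=> dx; have [[b h]|[a h]] := dx.
    have := (Hy x (proj2 (mem_supp _ _) dx)).1 (lt_u _ _ h) => /lt_trans; apply.
    exact: Opos.
  rewrite (P3 _ _ h); apply: Ig; apply: (Hy a _).1; last exact: lt_u h.
  by apply/mem_supp; left; exists x.
pose pi x := if x == m then g y else if x == u then y else pi' x.
have pi_s' x : in_supp s' x -> pi x = pi' x.
  move=> dx; rewrite /pi ifF; last by apply/negbTE; rewrite lt_eqF ?supp_lt_m.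
  by case: eqP => // ex; subst x; rewrite Hyu //; apply/mem_supp.
have pi_u : pi u = y by rewrite /pi lt_eqF // eqxx.
have pi_m : pi m = g y by rewrite /pi eqxx.
exists pi; split.
- move=> x z /supp_s [->|->|dx] /supp_s [->|->|dz] xz; rewrite ?pi_u ?pi_m ?pi_s' //.
  + by rewrite ltxx in xz.
  + exact: Opos Oy.
  + by apply: (Hy z (proj2 (mem_supp _ _) dz)).2.
  + by have := lt_trans xz um; rewrite ltxx.
  + by rewrite ltxx in xz.
  + by have := supp_lt_m _ dz; rewrite ltNge (ltW xz).
  + by apply: (Hy x (proj2 (mem_supp _ _) dx)).1.
  + exact: below_gy.
  + exact: P1.
- by move=> x /supp_s [->|->|dx]; rewrite ?pi_u ?pi_m ?pi_s' //; [apply: Og|apply: P2].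
- move=> a b; case: (eqVneq a u) => [-> h|au h]; first by rewrite (fun_u _ h) pi_m pi_u.
  have h' : (a, b) \in s' by rewrite mem_s' h au.
  by rewrite !pi_s'; [exact: P3|left; exists b|right; exists a].
Qed.

Lemma realize s : ord_pairs s -> (forall a b, (a, b) \in s -> a < b) ->
  exists pi, realizes g O s pi.
Proof.
have [n] := ubnP (size s); elim: n s => // n IH s hsn Hs Hpos.
have [->|ns] := eqVneq s [::].
  by exists id; split => [x y [[? //]|[? //]]|x [[? //]|[? //]]|].
have [[u m] [hum Hum]] := @exists_seq_max _ s snd (ltac:(by apply/eqP)).
pose s' := [seq xy <- s | xy.1 != u].
have mem_s' a b : ((a, b) \in s') = ((a, b) \in s) && (a != u) by rewrite mem_filter andbC.
have hs'n : (size s' < n)%N.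
  by rewrite -ltnS; apply: leq_trans hsn; rewrite ltnS (size_filter_lt hum) //= eqxx.
have Hs' : ord_pairs s' by apply: ord_pairsW Hs => -[a b]; rewrite mem_s' => /andP [].
have [|pi' R'] := IH s' hs'n Hs'; first by move=> a b; rewrite mem_s' => /andP [/Hpos].
exact: realizes_top_pair Hs Hpos hum Hum mem_s' R'.
Qed.

End Realize.

Lemma between_split x y z t : between x z t -> between x y t \/ between y z t.
Proof.
rewrite !betweenP => h.
by case: (leP x y) => h1; case: (leP y t) => h2; case: (leP t y) => h3;
  try (left; lra); try (right; lra); lra.
Qed.

Definition aparity (c : rat -> rat) x := Num.sg (c x - x).

Lemma aparity_cases c x :
  [\/ x < c x /\ aparity c x = 1, c x < x /\ aparity c x = -1 | c x = x /\ aparity c x = 0].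
Proof.
rewrite /aparity; case: (ltgtP x (c x)) => h.
- by constructor 1; rewrite gtr0_sg // subr_gt0.
- by constructor 2; rewrite ltr0_sg // subr_lt0.
- by constructor 3; rewrite -h subrr sgr0.
Qed.

Section AutomorphismParity.
Variables (c ci : rat -> rat).
Hypotheses (K1 : cancel c ci) (K2 : cancel ci c) (I : {homo c : x y / x < y}).

Lemma aparity_app x : aparity c (c x) = aparity c x.
Proof.
case: (aparity_cases c x) => [[h ->]|[h ->]|[h ->]].
- by rewrite /aparity gtr0_sg // subr_gt0; apply: I.
- by rewrite /aparity ltr0_sg // subr_lt0; apply: I.
- by rewrite h /aparity h subrr sgr0.
Qed.

Lemma aparity_inv x : aparity ci x = - aparity c x.
Proof.
have mono := leW_mono (le_mono I).
case: (aparity_cases c x) => [[h ->]|[h ->]|[h ->]].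
- by rewrite /aparity ltr0_sg // subr_lt0 -mono K2.
- by rewrite /aparity gtr0_sg // subr_gt0 -mono K2.
- by rewrite oppr0 /aparity -{1}h K1 subrr sgr0.
Qed.

Lemma aparity_between a z : between a (c a) z -> aparity c z = aparity c a.
Proof.
move/betweenP => hz; case: (aparity_cases c a) => [[h ->]|[h ->]|[h _]].
- have [->|ne] := eqVneq z a; first by rewrite /aparity gtr0_sg // subr_gt0.
  rewrite /aparity gtr0_sg // subr_gt0 ltNge; apply/negP => hc.
  have az : a < z by move/eqP: ne; lra.
  by have := I az; lra.
- have [->|ne] := eqVneq z a; first by rewrite /aparity ltr0_sg // subr_lt0.
  rewrite /aparity ltr0_sg // subr_lt0 ltNge; apply/negP => hc.
  have za : z < a by move/eqP: ne; lra.
  by have := I za; lra.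
- by have -> : z = a by lra.
Qed.

(* [z] lies in the [c]-orbital of [f], or in the same interval of fixed points. *)
Definition constant_aparity f z := forall t, between f z t -> aparity c t = aparity c f.

Lemma constant_aparity_refl f : constant_aparity f f.
Proof. by move=> t /betweenP h; have -> : t = f by lra. Qed.

Lemma constant_aparity_end f z : constant_aparity f z -> aparity c z = aparity c f.
Proof. by apply; rewrite betweenP; lra. Qed.

Lemma constant_aparity_convex f : convex (constant_aparity f).
Proof.
move=> x y z Rx Rz hy t /betweenP ht.
case/andP: hy => xy yz; case: (leP f y) => h.
  by case: (leP f z) => h2; [apply: Rz|apply: Rx]; rewrite betweenP; lra.
by case: (leP x f) => h2; [apply: Rx|apply: Rz]; rewrite betweenP; lra.
Qed.

Lemma constant_aparity_app f z : constant_aparity f z -> constant_aparity f (c z).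
Proof.
move=> R t /(between_split z) [h|h]; first exact: R.
by rewrite (aparity_between h); apply: constant_aparity_end.
Qed.

Lemma constant_aparity_inv_app f z : constant_aparity f z -> constant_aparity f (ci z).
Proof.
move=> R t /(between_split z) [h|h]; first exact: R.
have h' : between (ci z) (c (ci z)) t by rewrite K2; move: h; rewrite !betweenP; lra.
by rewrite (aparity_between h') -aparity_app K2; apply: constant_aparity_end.
Qed.

Lemma constant_aparity_lt f z : aparity c f = 1 -> constant_aparity f z -> z < c z.
Proof.
move=> s1 /constant_aparity_end; rewrite s1.
by case: (aparity_cases c z) => [[h _]|[_ ->]|[_ ->]] // /eqP; rewrite ?oppr_eq0 oner_eq0.
Qed.

End AutomorphismParity.

Lemma constant_aparity_inv c ci f z : cancel c ci -> cancel ci c -> {homo c : x y / x < y} ->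
  constant_aparity ci f z -> constant_aparity c f z.
Proof.
move=> K1 K2 I R t /R; rewrite !(aparity_inv K1 K2 I) => h.
by rewrite -[aparity c t]opprK h opprK.
Qed.

Lemma homo_can (c ci : rat -> rat) : cancel ci c -> {homo c : x y / x < y} ->
  {homo ci : x y / x < y}.
Proof. by move=> K2 I x y xy; rewrite -(leW_mono (le_mono I)) !K2. Qed.

(** * Blocks *)

Lemma count_lt_subpred (T : eqType) (a1 a2 : pred T) (s : seq T) x :
  subpred a1 a2 -> x \in s -> a2 x -> ~~ a1 x -> (count a1 s < count a2 s)%N.
Proof.
move=> sub; elim: s => [//|y s IH]; rewrite in_cons => /orP [/eqP <-|hs] h2 h1 /=.
  by rewrite h2 (negPf h1) add1n add0n ltnS; apply: sub_count.
have := IH hs h2 h1; case e: (a1 y); first by rewrite (sub _ e) !add1n ltnS.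
by move=> h; rewrite add0n; apply: leq_trans h _; apply: leq_addl.
Qed.

Definition chain (rho : rat -> rat) (X : seq rat) : qpmap :=
  fmap_of_pairs [seq (rho x, rho (x + 1)) | x <- X].

Section Chain.
Variables (rho : rat -> rat) (X : seq rat) (A B : rat).
Hypothesis rho_homo : {homo rho : x y / x < y}.

Let rho_mono := leW_mono (le_mono rho_homo).
Let rho_lemono := le_mono rho_homo.

Lemma maps_chain a b : maps (chain rho X) a b <-> exists2 x, x \in X & a = rho x /\ b = rho (x + 1).
Proof.
split; first by move/fmap_of_pairs_maps/mapP => [x hx [-> ->]]; exists x.
move=> [x hx [-> ->]]; apply: maps_fmap_of_pairs; first by apply/mapP; exists x.
by move=> b' /mapP [x' _ [/(inc_inj rho_lemono) -> ->]].
Qed.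

Lemma DR_chain z : DR (chain rho X) z <-> exists2 x, x \in X & z = rho x \/ z = rho (x + 1).
Proof.
rewrite DRP; split.
  by case=> -[b /maps_chain [x hx [e1 e2]]]; exists x => //; [left|right].
move=> [x hx [->|->]]; [left; exists (rho (x + 1))|right; exists (rho x)];
  by apply/maps_chain; exists x.
Qed.

Lemma chain_lt a b : maps (chain rho X) a b -> a < b.
Proof. by case/maps_chain => x _ [-> ->]; rewrite rho_mono ltrDl. Qed.

Lemma chain_pisom : pisom (chain rho X).
Proof.
move=> a b a' b' /maps_chain [x _ [-> ->]] /maps_chain [x' _ [-> ->]].
by rewrite !rho_mono ltrD2r.
Qed.

Hypotheses (XA : A - 1 \in X) (X_bounds : forall x, x \in X -> A - 1 <= x <= B).
Hypotheses (X_succ : forall x, x \in X -> x + 1 <= B -> x + 1 \in X)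
           (X_pred : forall x, x \in X -> A <= x -> x - 1 \in X).

Lemma chain_connected x y :
  DR (chain rho X) x -> DR (chain rho X) y -> psim (chain rho X) x y.
Proof.
pose q := chain rho X.
have to_base x' : x' \in X -> psim q (rho x') (rho (A - 1)).
  have [n] := ubnP (count (fun t => t < x') X); elim: n x' => // n IH x' hn hx.
  have [->|nex] := eqVneq x' (A - 1); first exact: rst_refl.
  have xA : A - 1 < x' by rewrite lt_neqAle eq_sym nex; case/andP: (X_bounds hx).
  have Lne : [seq t <- X | t < x'] <> [::].
    move=> e; have : A - 1 \in [seq t <- X | t < x'] by rewrite mem_filter xA XA.
    by rewrite e.
  have [z [hz Hz]] := @exists_seq_max _ _ id Lne.
  move: hz; rewrite mem_filter => /andP [zx zX].
  have xz : x' <= z + 1.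
    case: (leP (z + 1) B) => hb; last by case/andP: (X_bounds hx) => _ /le_trans; apply; apply: ltW.
    rewrite leNgt; apply/negP => h.
    by have := Hz (z + 1); rewrite mem_filter h X_succ //= => /(_ isT); lra.
  apply: rst_trans (IH z _ zX); last first.
    rewrite ltnS in hn; apply: leq_trans hn.
    by apply: (count_lt_subpred (x := z)) => //= [t /lt_trans|]; [apply|rewrite ltxx].
  apply/rst_sym/rst_step/(prel_maps_up (b := rho (z + 1))).
  - by apply/maps_chain; exists z.
  - by rewrite rho_mono ltrDl.
  - by rewrite !rho_lemono xz ltW.
have DR_base z : DR q z -> psim q z (rho (A - 1)).
  move=> /DR_chain [x' hx [->|->]]; first exact: to_base.
  have e : psim q (rho (x' + 1)) (rho x').
    by apply/rst_sym/rst_step/prel_maps/maps_chain; exists x'.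
  exact: rst_trans _ _ _ _ _ e (to_base _ hx).
by move=> /DR_base hx /DR_base hy; apply: rst_trans _ _ _ _ _ hx (rst_sym _ _ _ _ hy).
Qed.

(* A point without image lies above [rho B], a point without preimage below [rho A]. *)
Lemma chain_ends a a' : DR (chain rho X) a -> DR (chain rho X) a' ->
  (chain rho X).[? a] = None -> pinv (chain rho X) a' = None -> a' < a.
Proof.
move=> /DR_chain [x hx ha] /DR_chain [x' hx' ha'] na na'.
have [-> Bx] : a = rho (x + 1) /\ B < x + 1.
  case: ha => ha.
    by move: na; rewrite ha; have -> : (chain rho X).[? rho x] = Some (rho (x + 1))
      by apply/maps_chain; exists x.
  split => //; rewrite ltNge; apply/negP => hb; move: na; rewrite ha.
  by have -> : (chain rho X).[? rho (x + 1)] = Some (rho (x + 1 + 1))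
    by apply/maps_chain; exists (x + 1) => //; apply: X_succ.
have [-> xA] : a' = rho x' /\ x' < A.
  case: ha' => ha'; last first.
    have : maps (chain rho X) (rho x') a' by apply/maps_chain; exists x'.
    by move/maps_pinv_neq; rewrite na'.
  split => //; rewrite ltNge; apply/negP => hA.
  have : maps (chain rho X) (rho (x' - 1)) a'.
    by apply/maps_chain; exists (x' - 1); rewrite ?ha' ?subrK //; apply: X_pred.
  by move/maps_pinv_neq; rewrite na'.
by rewrite rho_mono; case/andP: (X_bounds hx') => _ h; lra.
Qed.

End Chain.

Lemma translation_grid (D : seq rat) A B : A \in D -> (forall d, d \in D -> A <= d <= B) ->
  exists X : seq rat, [/\ {subset D <= X}, A - 1 \in X,
    forall x, x \in X -> A - 1 <= x <= B,
    forall x, x \in X -> x + 1 <= B -> x + 1 \in X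
  & forall x, x \in X -> A <= x -> x - 1 \in X].
Proof.
move=> AD DAB; have AB : A <= B by case/andP: (DAB _ AD).
(* [X] is [D + Z] cut down to [[A - 1, B]]; translates by more than [N] leave it. *)
pose N := Num.Def.archi_bound (B - A + 2).
have hN : B - A + 2 < N%:R by apply: archi_boundP; lra.
pose ks := [seq (i%:R - N%:R : rat) | i <- iota 0 (2 * N).+1].
pose X := [seq x <- [seq d + k | d <- D, k <- ks] | (A - 1 <= x) && (x <= B)].
have memX x : x \in X <-> (A - 1 <= x <= B) /\
    exists d i, [/\ d \in D, (i <= 2 * N)%N & x = d + i%:R - N%:R].
  rewrite mem_filter; split.
    case/andP => hx /allpairsP [[d k] [/= hd /mapP [i hi ek] ex]].
    move: hi; rewrite mem_iota add0n ltnS => hi.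
    by split => //; exists d, i; rewrite ex ek addrA.
  move=> [hx [d [i [hd hi ex]]]]; rewrite hx; apply/allpairsP.
  exists (d, i%:R - N%:R) => /=; split; rewrite ?ex ?addrA //.
  by apply/mapP; exists i => //; rewrite mem_iota add0n ltnS.
exists X; split.
- move=> d hd; have /andP [Ad dB] := DAB _ hd.
  apply/memX; split; first by apply/andP; split; lra.
  by exists d, N; rewrite mulSn leq_addr; split => //; lra.
- apply/memX; split; first by apply/andP; split; lra.
  have N1 : (0 < N)%N by rewrite -(ltr_nat rat); lra.
  exists A, N.-1; split => //; first by apply: leq_trans (leq_pred N) _; rewrite mulSn leq_addr.
  by rewrite -[X in _ - X%:R](prednK N1) -addn1 natrD; lra.
- by move=> x /memX [].
- move=> x /memX [/andP [h1 h2] [d [i [hd hi ex]]]] hB; subst x.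
  have /andP [Ad dB] := DAB _ hd.
  apply/memX; split; first by apply/andP; split; lra.
  have hi' : (i < 2 * N)%N.
    rewrite ltn_neqAle hi andbT; apply/negP => /eqP ei.
    by move: hB; rewrite ei natrM; lra.
  by exists d, i.+1; split => //; rewrite -addn1 natrD; lra.
- move=> x /memX [/andP [h1 h2] [d [i [hd hi ex]]]] hA; subst x.
  have /andP [Ad dB] := DAB _ hd.
  apply/memX; split; first by apply/andP; split; lra.
  case: i hi h1 h2 hA => [|j] hi h1 h2 hA; first by move: hA; rewrite /=; lra.
  exists d, j; split => //; first exact: ltnW.
  by rewrite -addn1 natrD; lra.
Qed.

Lemma chain_realization c ci rho rhoi X f :
  cancel ci c -> {homo c : x y / x < y} ->
  cancel rho rhoi -> cancel rhoi rho -> {homo rho : x y / x < y} -> aparity c f = 1 ->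
  exists pi, [/\ forall x y, DR (chain rho X) x -> DR (chain rho X) y -> x < y -> pi x < pi y,
    forall x, DR (chain rho X) x -> constant_aparity c f (pi x)
  & forall a b, maps (chain rho X) a b -> pi b = c (pi a)].
Proof.
move=> K2 I R1 R2 RI sf.
pose M := [seq (x, x + 1) | x <- X].
have HM : ord_pairs M.
  move=> a b a' b' /mapP [x _ [-> ->]] /mapP [x' _ [-> ->]].
  by split => [|->//]; rewrite ltrD2r.
have [|piM [PM1 PM2 PM3]] := realize K2 I (@constant_aparity_convex c f)
  (@constant_aparity_app c I f) (@constant_aparity_inv_app c ci K2 I f)
  (fun z => @constant_aparity_lt c f z sf) (@constant_aparity_refl c f) HM.
  by move=> a b /mapP [x _ [-> ->]]; rewrite ltrDl.
have suppM z : DR (chain rho X) z -> in_supp M (rhoi z).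
  move=> /(DR_chain X RI) [x hx [->|->]]; rewrite R1; [left; exists (x + 1)|right; exists x];
    by apply/mapP; exists x.
exists (piM \o rhoi); split => /=.
- move=> x y hx hy xy; apply: PM1; try exact: suppM.
  by rewrite -(leW_mono (le_mono RI)) !R2.
- by move=> x hx; apply/PM2/suppM.
- move=> a b /(maps_chain X RI) [x hx [-> ->]]; rewrite !R1; apply: PM3.
  by apply/mapP; exists x.
Qed.

Lemma exists_conjugator (D : seq rat) (phi : rat -> rat) d0 A B m1 m2 :
  d0 \in D -> {in D &, {homo phi : x y / x < y}} ->
  (forall d, d \in D -> A <= phi d <= B) -> (forall d, d \in D -> m1 < d /\ d < m2) ->
  exists rho rhoi, [/\ cancel rho rhoi, cancel rhoi rho, {homo rho : x y / x < y},
    forall d, d \in D -> rho (phi d) = d & m1 < rho (A - 1) /\ rho (B + 1) < m2].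
Proof.
move=> hd0 Hphi HAB Hm.
have Dne : D <> [::] by move=> e; rewrite e in hd0.
have [lo [hlo Hlo]] := @exists_seq_min _ D id Dne.
have [hi [hhi Hhi]] := @exists_seq_max _ D id Dne.
have [m1lo _] := Hm _ hlo; have [_ him2] := Hm _ hhi.
have lohi := Hlo _ hhi; have /andP [A0 B0] := HAB _ hd0.
pose lo' := (m1 + lo) / 2; pose hi' := (hi + m2) / 2.
have phi_lt d d' : d \in D -> d' \in D -> (phi d < phi d') = (d < d').
  move=> hd hd'; apply/idP/idP; last exact: Hphi.
  move=> h; rewrite ltNge le_eqVlt; apply/negP => /orP [/eqP e|h2].
    by move: h; rewrite e ltxx.
  by have := Hphi _ _ hd' hd h2; rewrite ltNge (ltW h).
pose T := [seq (phi d, d) | d <- D] ++ [:: (A - 1, lo'); (B + 1, hi')].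
have memT a b : (a, b) \in T ->
    [\/ exists2 d, d \in D & a = phi d /\ b = d, a = A - 1 /\ b = lo' | a = B + 1 /\ b = hi'].
  rewrite mem_cat => /orP [/mapP [d hd [-> ->]]|]; first by constructor 1; exists d.
  by rewrite !inE => /orP [/eqP [-> ->]|/eqP [-> ->]]; [constructor 2|constructor 3].
have HT : ord_pairs T.
  apply: ord_pairs_strict => a b a' b' /memT h /memT h';
    case: h => [[d hd [-> ->]]|[-> ->]|[-> ->]];
    case: h' => [[d' hd' [-> ->]]|[-> ->]|[-> ->]] => ab;
    rewrite /lo' /hi' in ab *;
    try (have /andP [f1 f2] := HAB _ hd); try (have f3 := Hlo _ hd); try (have f4 := Hhi _ hd);
    try (have /andP [f5 f6] := HAB _ hd'); try (have f7 := Hlo _ hd'); try (have f8 := Hhi _ hd');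
    try lra.
  - by rewrite -(phi_lt _ _ hd hd').
  - by rewrite (phi_lt _ _ hd hd').
have [rho [rhoi [R1 R2 RI RE]]] := ord_pairs_extend HT.
exists rho, rhoi; split => //.
- by move=> d hd; apply: RE; rewrite mem_cat; apply/orP; left; apply/mapP; exists d.
- have -> : rho (A - 1) = lo' by apply: RE; rewrite mem_cat !inE eqxx orbT.
  have -> : rho (B + 1) = hi' by apply: RE; rewrite mem_cat !inE eqxx !orbT.
  by rewrite /lo' /hi'; lra.
Qed.

(* A block: one colored orbital [q] of parity [sigma] extending [s] inside
   [(m1, m2)], with an equivariant embedding [pi] into the [c]-orbital of [f]. *)
Record block c (s : seq (rat * rat)) (m1 m2 f sigma : rat) (q : qpmap) (pi : rat -> rat) :
  Prop := {
  block_pisom : pisom q;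
  block_ext : forall a b, (a, b) \in s -> maps q a b;
  block_bounds : forall x, DR q x -> m1 < x /\ x < m2;
  block_connected : forall x y, DR q x -> DR q y -> psim q x y;
  block_parity : forall x, DR q x -> parity q x = sigma;
  block_up : sigma = 1 -> forall a a', DR q a -> DR q a' ->
    q.[? a] = None -> pinv q a' = None -> a' < a;
  block_down : sigma = -1 -> forall a a', DR q a -> DR q a' ->
    q.[? a'] = None -> pinv q a = None -> a' < a;
  block_homo : forall x y, DR q x -> DR q y -> x < y -> pi x < pi y;
  block_orbital : forall x, DR q x -> constant_aparity c f (pi x);
  block_equiv : forall a b, maps q a b -> pi b = c (pi a) }.

(* Realize [s] inside the translation [x |-> x + 1], fill the gaps of the
   resulting grid by a chain, and move everything back with a conjugator. *)
Lemma block_pos c ci s m1 m2 f :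
  cancel ci c -> {homo c : x y / x < y} ->
  ord_pairs s -> (forall a b, (a, b) \in s -> c a = b) -> (forall a b, (a, b) \in s -> a < b) ->
  in_supp s f -> aparity c f = 1 -> (forall x, in_supp s x -> m1 < x /\ x < m2) ->
  exists q pi, block c s m1 m2 f 1 q pi.
Proof.
move=> K2 Ic Hs Hc Hpos sf sf1 Hm.
have tKV : cancel (fun x : rat => x - 1) (fun x => x + 1) by move=> x; rewrite subrK.
have tI : {homo (fun x : rat => x + 1) : x y / x < y} by move=> x y; rewrite ltrD2r.
have tpos : forall x : rat, True -> x < x + 1 by move=> x _; rewrite ltrDl.
have [phi [Ph1 _ Ph3]] := realize (O := fun=> True) (o := 0) tKV tI (fun _ _ _ _ _ _ => I)
  (fun _ _ => I) (fun _ _ => I) tpos I Hs Hpos.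
pose D := supp s.
have fD : f \in D by apply/mem_supp.
have Dne : D <> [::] by move=> e; rewrite e in fD.
have phi_homo : {in D &, {homo phi : x y / x < y}}.
  by move=> x y /mem_supp hx /mem_supp hy; apply: Ph1.
have [dA [hdA HA]] := @exists_seq_min _ D phi Dne.
have [dB [hdB HB]] := @exists_seq_max _ D phi Dne.
have phiAB d : d \in D -> phi dA <= phi d <= phi dB by move=> hd; rewrite HA ?HB.
have imAB x : x \in [seq phi d | d <- D] -> phi dA <= x <= phi dB.
  by case/mapP => d hd ->; apply: phiAB.
have [X [DX XA Xb Xs Xp]] := translation_grid (map_f phi hdA) imAB.
have [rho [rhoi [R1 R2 RI Rphi [Rlo Rhi]]]] := exists_conjugator fD phi_homo phiAB
  (fun d hd => Hm d (proj1 (mem_supp s d) hd)).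
have [pi [P1 P2 P3]] := chain_realization X K2 Ic R1 R2 RI sf1.
have rho_le := le_mono RI.
exists (chain rho X), pi; split => //.
- exact: chain_pisom.
- move=> a b h.
  have ha : a \in D by apply/mem_supp; left; exists b.
  have hb : b \in D by apply/mem_supp; right; exists a.
  apply/(maps_chain X RI); exists (phi a); first exact/DX/map_f.
  by rewrite -(Ph3 _ _ h) !Rphi.
- move=> z /(DR_chain X RI) [x hx ez]; have /andP [h1 h2] := Xb _ hx.
  have : rho (phi dA - 1) <= z /\ z <= rho (phi dB + 1).
    by case: ez => ->; rewrite !rho_le; split; lra.
  lra.
- exact: (chain_connected RI XA Xb Xs).
- by move=> x; apply/parity_pos; [exact: chain_pisom|exact: chain_lt].
- by move=> _; apply: (chain_ends RI Xb Xs Xp).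
Qed.

Definition swap_pairs (s : seq (rat * rat)) := [seq (xy.2, xy.1) | xy <- s].

Lemma mem_swap_pairs s a b : (a, b) \in swap_pairs s = ((b, a) \in s).
Proof.
apply/mapP/idP => [[[x y] h [-> ->]] //|h].
by exists (b, a).
Qed.

Lemma in_supp_swap_pairs s x : in_supp (swap_pairs s) x <-> in_supp s x.
Proof.
rewrite /in_supp; split.
  by case=> [[b]|[a]]; rewrite mem_swap_pairs => h; [right; exists b|left; exists a].
by case=> [[b h]|[a h]]; [right; exists b|left; exists a]; rewrite mem_swap_pairs.
Qed.

Lemma ord_pairs_swap s : ord_pairs s -> ord_pairs (swap_pairs s).
Proof.
move=> Hs; apply: ord_pairs_strict => a b a' b'; rewrite !mem_swap_pairs => h h' ab.
- case: (ltgtP b b') => // hb.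
  + by have := (Hs _ _ _ _ h' h).1 hb; rewrite ltNge (ltW ab).
  + by subst b'; have := (Hs _ _ _ _ h' h).2 erefl => e; rewrite e ltxx in ab.
- exact: (Hs _ _ _ _ h h').1.
Qed.

Lemma aparity_gt0 c a : aparity c a = 1 -> a < c a.
Proof. by case: (aparity_cases c a) => -[h ->] // /eqP; rewrite ?oppr_eq0 oner_eq0. Qed.

Lemma aparity_lt0 c a : aparity c a = -1 -> c a < a.
Proof.
by case: (aparity_cases c a) => -[h ->] // /eqP; rewrite ?oppr_eq0 ?oner_eq0 // -subr_eq0 opprK.
Qed.

Lemma block_fmap_inv c ci s m1 m2 f q pi :
  cancel c ci -> cancel ci c -> {homo c : x y / x < y} ->
  block ci (swap_pairs s) m1 m2 f 1 q pi -> block c s m1 m2 f (-1) (fmap_inv q) pi.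
Proof.
move=> K1 K2 Ic [H1 H2 H3 H4 H5 H6 _ H8 H9 H10].
have DRi x : DR (fmap_inv q) x <-> DR q x := DR_fmap_inv x H1.
split.
- exact: fmap_inv_pisom.
- by move=> a b h; apply/(maps_fmap_inv _ _ H1)/H2; rewrite mem_swap_pairs.
- by move=> x /DRi; apply: H3.
- by move=> x y /DRi hx /DRi hy; apply/(psim_fmap_inv _ _ H1)/H4.
- by move=> x /DRi hx; rewrite parity_fmap_inv // H5.
- by move=> h; exfalso; lra.
- move=> _ a a' /DRi ha /DRi ha'.
  by rewrite fnd_fmap_inv // pinv_fmap_inv // => n1 n2; apply: H6 n2 n1.
- by move=> x y /DRi hx /DRi hy; apply: H8.
- by move=> x /DRi hx; apply: (constant_aparity_inv K1 K2 Ic); apply: H9.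
- by move=> a b /(maps_fmap_inv _ _ H1) h; rewrite (H10 _ _ h) K2.
Qed.

Lemma block_exists c ci s m1 m2 f sigma :
  cancel c ci -> cancel ci c -> {homo c : x y / x < y} ->
  ord_pairs s -> (forall a b, (a, b) \in s -> c a = b) ->
  in_supp s f -> (forall x, in_supp s x -> aparity c x = sigma) -> sigma <> 0 ->
  (forall x, in_supp s x -> m1 < x /\ x < m2) ->
  exists q pi, block c s m1 m2 f sigma q pi.
Proof.
move=> K1 K2 Ic Hs Hc sf Hsg nz Hm.
have := Hsg _ sf.
case: (aparity_cases c f) => [[_ ->]|[_ ->]|[_ ->]] esig; subst sigma => //.
- have Hpos a b : (a, b) \in s -> a < b.
    by move=> h; rewrite -(Hc _ _ h); apply/aparity_gt0/Hsg; left; exists b.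
  exact: block_pos K2 Ic Hs Hc Hpos sf (Hsg _ sf) Hm.
- have Ici := homo_can K2 Ic.
  have supp' x : in_supp (swap_pairs s) x <-> in_supp s x := in_supp_swap_pairs s x.
  have Hpos a b : (a, b) \in swap_pairs s -> a < b.
    by rewrite mem_swap_pairs => h; rewrite -(Hc _ _ h); apply/aparity_lt0/Hsg; left; exists a.
  have Hc' a b : (a, b) \in swap_pairs s -> ci a = b.
    by rewrite mem_swap_pairs => /Hc <-; apply: K1.
  have sf1 : aparity ci f = 1 by rewrite (aparity_inv K1 K2 Ic) Hsg ?opprK.
  have Hm' x : in_supp (swap_pairs s) x -> m1 < x /\ x < m2 by move/supp'; apply: Hm.
  have [q [pi B]] := block_pos K1 Ici (ord_pairs_swap Hs) Hc' Hpos (proj2 (supp' f) sf) sf1 Hm'.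
  by exists (fmap_inv q), pi; apply: block_fmap_inv B.
Qed.

Lemma block_fixed c s w U f :
  aparity c f = 0 -> (forall a b, (a, b) \in s -> a = f /\ b = f) -> w < f -> f < U ->
  block c s w U f 0 [fmap].[f <- f] id.
Proof.
move=> sf Hs wf fU.
pose q : qpmap := [fmap].[f <- f].
have Eq a b : maps q a b <-> a = f /\ b = f.
  rewrite /maps fnd_set fnd_fmap0; case: eqP => [->|nf]; last by split => [//|[]].
  by split => [[->]|[_ ->]].
have DRq x : DR q x -> x = f by move=> /DRP [[b /Eq [-> _]]|[b /Eq [_ ->]]].
split => //.
- by move=> a b a' b' /Eq [-> _] /Eq [-> _]; rewrite ltxx.
- by move=> a b /Hs [-> ->]; apply/Eq.
- by move=> x /DRq ->.
- by move=> x y /DRq -> /DRq ->; apply: rst_refl.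
- by move=> x /DRq ->; rewrite (parity_dom (b := f)) ?subrr ?sgr0 //; apply/Eq.
- by move=> x /DRq ->; apply: constant_aparity_refl.
- by move=> a b /Eq [-> ->] /=; case: (aparity_cases c f) => -[h]; rewrite sf.
Qed.

(** * Gluing blocks *)

Section SeparatedUnion.
Variables (q1 q2 : qpmap) (w : rat).
Hypotheses (iso1 : pisom q1) (iso2 : pisom q2).
Hypotheses (below : forall x, DR q1 x -> x < w) (above : forall x, DR q2 x -> w < x).

Let q := catf q1 q2.

Let notin_dom2 x : DR q1 x -> x \notin domf q2.
Proof.
move=> /below xw; apply/negP; rewrite -fndSome => h.
have /above : DR q2 x by left; case: (q2.[? x]) h.
by rewrite ltNge (ltW xw).
Qed.

Lemma maps_catf a b : maps q a b <-> maps q1 a b \/ maps q2 a b.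
Proof.
rewrite /maps fnd_cat; case: ifP => h.
  split; first by right.
  by case=> // e; have := notin_dom2 (DR_dom e); rewrite h.
rewrite (not_fnd (negbT h)); split; first by left.
by case=> // e; move: h; rewrite -fndSome e.
Qed.

Lemma DR_catf x : DR q x <-> DR q1 x \/ DR q2 x.
Proof.
rewrite !DRP; split.
  by case=> -[b /maps_catf [h|h]]; [left; left|right; left|left; right|right; right]; exists b.
by case=> -[[b h]|[b h]]; [left|right|left|right]; exists b; apply/maps_catf; tauto.
Qed.

Lemma catf_pisom : pisom q.
Proof.
move=> a b a' b' /maps_catf h /maps_catf h' ab.
case: h => h; case: h' => h'.
- exact: iso1 h h' ab.
- by apply: lt_trans (below (DR_rng h)) (above (DR_rng h')).
- by have := lt_trans (below (DR_dom h')) (above (DR_dom h)); rewrite ltNge (ltW ab).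
- exact: iso2 h h' ab.
Qed.

Lemma agree_catf_l : agree_on q1 q.
Proof.
move=> x dx; split; first by rewrite fnd_cat (negbTE (notin_dom2 dx)).
apply: pinv_eq => // [|c']; first exact: catf_pisom.
rewrite maps_catf; split => [[//|/DR_rng /above]|]; last by left.
by rewrite ltNge (ltW (below dx)).
Qed.

Lemma agree_catf_r : agree_on q2 q.
Proof.
move=> x dx; split.
  rewrite fnd_cat; case: ifP => // hx; rewrite [q2.[? x]]not_fnd ?hx //.
  case e: (q1.[? x]) => [b|] //.
  by have := lt_trans (below (DR_dom e)) (above dx); rewrite ltxx.
apply: pinv_eq => // [|c']; first exact: catf_pisom.
rewrite maps_catf; split => [[/DR_rng /below|//]|]; last by right.
by rewrite ltNge (ltW (above dx)).
Qed.

End SeparatedUnion.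

(* A good extension [q] of [s] living below [U], whose colored orbitals are
   cut out by [ws], with an equivariant embedding [pi] into [c]. *)
Record solution c (s : seq (rat * rat)) (U : rat) (q : qpmap) (ws : seq rat)
    (pi : rat -> rat) : Prop := {
  sol_pisom : pisom q;
  sol_ext : forall a b, (a, b) \in s -> maps q a b;
  sol_below : forall x, DR q x -> x < U;
  sol_cut : forall w, w \in ws -> forall u v, maps q u v -> (w < u) = (w < v);
  sol_cut_supp : forall w, w \in ws -> exists x, in_supp s x /\ w < x;
  sol_class : forall x y, DR q x -> DR q y -> cut_index ws x = cut_index ws y -> psim q x y;
  sol_class_parity : forall x y, DR q x -> DR q y -> cut_index ws x = cut_index ws y ->
    parity q x = parity q y;
  sol_up : forall a a', DR q a -> DR q a' -> cut_index ws a = cut_index ws a' ->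
    parity q a = 1 -> q.[? a] = None -> pinv q a' = None -> a' <= a;
  sol_down : forall a a', DR q a -> DR q a' -> cut_index ws a = cut_index ws a' ->
    parity q a = -1 -> q.[? a'] = None -> pinv q a = None -> a' <= a;
  sol_neighbour : forall x y, DR q x -> DR q y -> (cut_index ws x < cut_index ws y)%N ->
    parity q x <> 0 -> parity q x = parity q y ->
    exists d, DR q d /\ (cut_index ws x < cut_index ws d)%N /\ (cut_index ws d < cut_index ws y)%N;
  sol_parity : forall x, in_supp s x -> parity q x = aparity c x;
  sol_homo : forall x y, DR q x -> DR q y -> x < y -> pi x < pi y;
  sol_equiv : forall a b, maps q a b -> pi b = c (pi a);
  (* [pi] maps [q] below every point beyond the [c]-run of the top point [l] of [s] *)
  sol_top : forall l, in_supp s l -> (forall x, in_supp s x -> x <= l) ->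
    forall x z, DR q x -> l < z -> aparity c z <> aparity c l \/ aparity c l = 0 -> pi x < z;
  sol_nonempty : forall x, DR q x -> s <> [::] }.

Lemma solution_nil c U : solution c [::] U [fmap] [::] id.
Proof.
have nD := DR_fmap0.
split; try by move=> ? ? /nD.
- by move=> a b c' d; rewrite fnd_fmap0.
- by move=> a b; rewrite in_nil.
- by move=> x /nD.
- by move=> w; rewrite in_nil.
- by move=> w; rewrite in_nil.
- by move=> x [[b]|[b]].
- by move=> a b /DR_dom /nD.
- by move=> x [[b]|[b]].
- by move=> x /nD.
Qed.

Lemma solution_good c s U q ws pi : solution c s U q ws pi -> good q.
Proof.
case=> iso _ _ cut _ cl _ up down nb _ _ _ _ _.
apply: (good_of_index (blk := cut_index ws)) => //.
- exact: cut_index_homo.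
- exact: cut_index_psim.
Qed.

Section Glue.
Variables (c : rat -> rat) (s s1 s2 : seq (rat * rat)) (U f sigma w : rat).
Variables (q1 q2 : qpmap) (ws1 : seq rat) (pi1 pi2 : rat -> rat).
Hypotheses (s_split : forall a b, (a, b) \in s -> (a, b) \in s1 \/ (a, b) \in s2)
  (supp1 : forall x, in_supp s1 x <-> in_supp s x /\ x < f)
  (supp2 : forall x, in_supp s2 x -> in_supp s x /\ f <= x).
Hypotheses (sf : in_supp s f) (af : aparity c f = sigma)
  (a_top : forall y, in_supp s y -> f <= y -> aparity c y = sigma)
  (a_gap : forall l, in_supp s1 l -> (forall x, in_supp s1 x -> x <= l) ->
     aparity c l <> sigma \/ sigma = 0)
  (fixed_pi2 : sigma = 0 -> forall x, DR q2 x -> pi2 x = f).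
Hypotheses (wf : w < f) (fU : f < U).
Hypotheses (V1 : solution c s1 w q1 ws1 pi1) (B : block c s2 w U f sigma q2 pi2).

Let q := catf q1 q2.
Let ws := rcons ws1 w.
Let pi x := if x < w then pi1 x else pi2 x.

Let below1 x : DR q1 x -> x < w := fun h => sol_below V1 h.
Let above2 x : DR q2 x -> w < x := fun h => (block_bounds B h).1.
Let iso1 := sol_pisom V1.
Let iso2 := block_pisom B.
Let maps_q a b : maps q a b <-> maps q1 a b \/ maps q2 a b := maps_catf below1 above2 a b.
Let DR_q x : DR q x <-> DR q1 x \/ DR q2 x := DR_catf below1 above2 x.
Let agree1 := agree_catf_l iso1 iso2 below1 above2.
Let agree2 := agree_catf_r iso1 iso2 below1 above2.

Let cut_lt_w w' : w' \in ws1 -> w' < w.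
Proof.
move=> /(sol_cut_supp V1) [x [dx h]].
exact: lt_trans h (below1 (in_supp_DR (sol_ext V1) dx)).
Qed.

Let index1 x : DR q1 x -> cut_index ws x = cut_index ws1 x.
Proof. by move=> dx; rewrite cut_index_rcons ltNge (ltW (below1 dx)) addn0. Qed.

Let index2 x : DR q2 x -> cut_index ws x = (size ws1).+1.
Proof.
move=> dx; rewrite cut_index_rcons (above2 dx) addn1 cut_index_all // => w' /cut_lt_w.
by move/lt_trans; apply; apply: above2.
Qed.

Let index12 x y : DR q1 x -> DR q2 y -> (cut_index ws x < cut_index ws y)%N.
Proof. by move=> dx dy; rewrite index1 // index2 // ltnS cut_index_le_size. Qed.

Let same_index x y : DR q x -> DR q y -> cut_index ws x = cut_index ws y ->
  [/\ DR q1 x, DR q1 y & cut_index ws1 x = cut_index ws1 y] \/ (DR q2 x /\ DR q2 y).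
Proof.
move=> /DR_q [hx|hx] /DR_q [hy|hy] e; [left|..|by right].
- by rewrite !index1 in e.
- by have := index12 hx hy; rewrite e ltnn.
- by have := index12 hy hx; rewrite e ltnn.
Qed.

Let top1 x : DR q1 x -> exists l, in_supp s1 l /\ forall y, in_supp s1 y -> y <= l.
Proof.
move=> /(sol_nonempty V1) ne1.
have ne : supp s1 <> [::] by case: (s1) ne1 => [//|[a b] s1'] _.
have [l [hl Hl]] := @exists_seq_max _ _ id ne.
by exists l; split; [apply/mem_supp|move=> y /mem_supp /Hl].
Qed.

Let pi1E x : DR q1 x -> pi x = pi1 x.
Proof. by move=> /below1 h; rewrite /pi h. Qed.

Let pi2E x : DR q2 x -> pi x = pi2 x.
Proof. by move=> /above2 h; rewrite /pi ltNge (ltW h). Qed.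

(* [pi1] stays below the [c]-orbital of [f], which contains the image of [pi2]. *)
Let pi12 x y : DR q1 x -> DR q2 y -> pi1 x < pi2 y.
Proof.
move=> dx dy; have [l [dl Hl]] := top1 dx; have [dls ls] := proj1 (supp1 l) dl.
apply: (sol_top V1 dl Hl dx).
- case: (eqVneq sigma 0) => [s0|sn0]; first by rewrite (fixed_pi2 s0 dy).
  rewrite ltNge; apply/negP => hz.
  have : aparity c l = aparity c f by apply: (block_orbital B dy); rewrite betweenP; lra.
  by rewrite af; case: (a_gap dl Hl) => // e; rewrite e eqxx in sn0.
- case: (eqVneq sigma 0) => [s0|sn0].
    rewrite (fixed_pi2 s0 dy) af s0.
    by case: (eqVneq (aparity c l) 0) => h; [right|left; apply/nesym/eqP].
  left; rewrite (constant_aparity_end (block_orbital B dy)) af.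
  by case: (a_gap dl Hl) => [/nesym //|e]; rewrite e eqxx in sn0.
Qed.

Let glue_cut w' : w' \in ws -> forall u v, maps q u v -> (w' < u) = (w' < v).
Proof.
rewrite mem_rcons in_cons => /orP [/eqP ->|hw] u v /maps_q [h|h].
- by rewrite ltNge (ltW (below1 (DR_dom h))) ltNge (ltW (below1 (DR_rng h))).
- by rewrite (above2 (DR_dom h)) (above2 (DR_rng h)).
- exact: (sol_cut V1 hw h).
- have hw' := cut_lt_w hw.
  by rewrite (lt_trans hw' (above2 (DR_dom h))) (lt_trans hw' (above2 (DR_rng h))).
Qed.

Let glue_neighbour x y : DR q x -> DR q y -> (cut_index ws x < cut_index ws y)%N ->
  parity q x <> 0 -> parity q x = parity q y ->
  exists d, DR q d /\ (cut_index ws x < cut_index ws d)%N /\ (cut_index ws d < cut_index ws y)%N.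
Proof.
move=> /DR_q [hx|hx] /DR_q [hy|hy] lt nz ep.
- rewrite !index1 // in lt *; rewrite !(parity_agree agree1) // in nz ep.
  have [d [dd [l1 l2]]] := sol_neighbour V1 hx hy lt nz ep.
  by exists d; rewrite index1 //; split => //; apply/DR_q; left.
- rewrite (parity_agree agree2 hy) (block_parity B hy) (parity_agree agree1 hx) in ep.
  rewrite (parity_agree agree1 hx) in nz.
  (* the top orbital of [q1] has the wrong parity, so it lies strictly between *)
  have [l [dl Hl]] := top1 hx.
  have Dl : DR q1 l := in_supp_DR (sol_ext V1) dl.
  have sl : aparity c l <> sigma by case: (a_gap dl Hl) => // e; rewrite ep e in nz.
  have bl : cut_index ws1 l = size ws1.
    by apply: cut_index_all => w' /(sol_cut_supp V1) [x' [dx' h]]; apply: lt_le_trans (Hl _ dx').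
  have bx : (cut_index ws1 x < size ws1)%N.
    rewrite ltn_neqAle cut_index_le_size andbT; apply/eqP => e.
    by have := sol_class_parity V1 hx Dl; rewrite e bl (sol_parity V1 dl) ep => /(_ erefl) /esym.
  by exists l; split; [apply/DR_q; left|rewrite (index1 hx) (index1 Dl) (index2 hy) bl].
- by have := ltn_trans (index12 hy hx) lt; rewrite ltnn.
- by move: lt; rewrite !index2 // ltnn.
Qed.

Let glue_top l : in_supp s l -> (forall x, in_supp s x -> x <= l) ->
  forall x z, DR q x -> l < z -> aparity c z <> aparity c l \/ aparity c l = 0 -> pi x < z.
Proof.
move=> dl Hl x z /DR_q [hx|hx] lz hz; last first.
  have sl : aparity c l = sigma by apply: a_top => //; apply: Hl.
  rewrite pi2E //; case: (eqVneq sigma 0) => [s0|sn0].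
    by rewrite (fixed_pi2 s0 hx) (le_lt_trans (Hl _ sf)).
  rewrite ltNge; apply/negP => hzp; case: hz; rewrite sl; last by move/eqP; rewrite (negbTE sn0).
  apply; rewrite -af; apply: (block_orbital B hx); rewrite betweenP; have := Hl _ sf; lra.
rewrite pi1E //; have [l1 [dl1 Hl1]] := top1 hx; have l1f := (proj1 (supp1 l1) dl1).2.
have [hz1|hz1] := boolP ((aparity c z != aparity c l1) || (aparity c l1 == 0)).
  apply: (sol_top V1 dl1 Hl1 hx); first by have := Hl _ sf; lra.
  by case/orP: hz1 => /eqP; [left|right].
have pf : pi1 x < f.
  apply: (sol_top V1 dl1 Hl1 hx) => //; left; rewrite af.
  case: (a_gap dl1 Hl1) => [/nesym //|e] e2.
  by move: hz1; rewrite -e2 e eqxx orbT.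
by apply: lt_trans pf _; apply: le_lt_trans (Hl _ sf) lz.
Qed.

Lemma solution_glue : solution c s U q ws pi.
Proof.
split.
- exact: catf_pisom iso1 iso2 below1 above2.
- move=> a b /s_split [h|h]; apply/maps_q; first by left; apply: (sol_ext V1 h).
  by right; apply: (block_ext B h).
- by move=> x /DR_q [/below1 h|/(block_bounds B) [] //]; apply: lt_trans h (lt_trans wf fU).
- exact: glue_cut.
- move=> w'; rewrite mem_rcons in_cons => /orP [/eqP ->|hw]; first by exists f.
  by have [x [dx h]] := sol_cut_supp V1 hw; exists x; split => //; apply: (proj1 (supp1 x) dx).1.
- move=> x y hx hy /(same_index hx hy) [[hx1 hy1 e]|[hx2 hy2]].
  + exact/(psim_agree agree1)/(sol_class V1).
  + exact/(psim_agree agree2)/(block_connected B).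
- move=> x y hx hy /(same_index hx hy) [[hx1 hy1 e]|[hx2 hy2]].
  + by rewrite !(parity_agree agree1) //; apply: (sol_class_parity V1).
  + by rewrite !(parity_agree agree2) // !(block_parity B).
- move=> a a' ha ha' /(same_index ha ha') [[ha1 ha1' e]|[ha2 ha2']].
  + rewrite (parity_agree agree1) // (agree1 ha1).1 (agree1 ha1').2.
    exact: (sol_up V1).
  + rewrite (parity_agree agree2) // (block_parity B) // (agree2 ha2).1 (agree2 ha2').2.
    by move=> s1' n1 n2; apply/ltW/(block_up B).
- move=> a a' ha ha' /(same_index ha ha') [[ha1 ha1' e]|[ha2 ha2']].
  + rewrite (parity_agree agree1) // (agree1 ha1').1 (agree1 ha1).2.
    exact: (sol_down V1).
  + rewrite (parity_agree agree2) // (block_parity B) // (agree2 ha2').1 (agree2 ha2).2.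
    by move=> s1' n1 n2; apply/ltW/(block_down B).
- exact: glue_neighbour.
- move=> x dx; have [d1|d2] : in_supp s1 x \/ in_supp s2 x.
    by case: dx => -[y /s_split [] h]; [left; left|right; left|left; right|right; right]; exists y.
  + rewrite (parity_agree agree1) ?(sol_parity V1) //; exact: in_supp_DR (sol_ext V1) d1.
  + have [dsx fx] := supp2 d2; have Dx := in_supp_DR (block_ext B) d2.
    by rewrite (parity_agree agree2) // (block_parity B) // a_top.
- move=> x y /DR_q [hx|hx] /DR_q [hy|hy] xy.
  + by rewrite !pi1E //; apply: (sol_homo V1).
  + by rewrite pi1E // pi2E //; apply: pi12.
  + by have := lt_trans (lt_trans (below1 hy) (above2 hx)) xy; rewrite ltxx.
  + by rewrite !pi2E //; apply: (block_homo B).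
- move=> a b /maps_q [h|h].
  + by rewrite !pi1E ?(sol_equiv V1 h) //; [exact: DR_dom h|exact: DR_rng h].
  + by rewrite !pi2E ?(block_equiv B h) //; [exact: DR_dom h|exact: DR_rng h].
- exact: glue_top.
- by move=> x _ e; move: sf; rewrite e => -[[b]|[b]].
Qed.

End Glue.

Lemma exists_max_below s f x : in_supp s x -> x < f ->
  exists l, [/\ in_supp s l, l < f & forall y, in_supp s y -> y < f -> y <= l].
Proof.
move=> dx xf; have ne : [seq y <- supp s | y < f] <> [::].
  move=> e; have : x \in [seq y <- supp s | y < f] by rewrite mem_filter xf; apply/mem_supp.
  by rewrite e.
have [l [+ Hl]] := @exists_seq_max _ _ id ne; rewrite mem_filter => /andP [lf /mem_supp dl].
by exists l; split => // y dy yf; apply: Hl; rewrite mem_filter yf; apply/mem_supp.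
Qed.

(* [f] starts the topmost run of points of [s] of constant [c]-parity [sigma];
   a run of fixed points is cut down to its last point. *)
Definition top_run c s f sigma :=
  [/\ in_supp s f, forall y, in_supp s y -> f <= y -> aparity c y = sigma,
      sigma = 0 -> forall y, in_supp s y -> f <= y -> y = f
    & forall l, in_supp s l -> l < f -> (forall x, in_supp s x -> x < f -> x <= l) ->
        aparity c l <> sigma \/ sigma = 0].

Lemma exists_top_run c s : s <> [::] -> exists f sigma, top_run c s f sigma.
Proof.
move=> sne; have Dne : supp s <> [::] by case: s sne.
have [t [ht Ht]] := @exists_seq_max _ _ id Dne.
pose sigma := aparity c t.
pose P x := all (fun y => (x <= y) ==> ((aparity c y == sigma) && ((sigma == 0) ==> (y == x))))
  (supp s).
have tP : t \in [seq x <- supp s | P x].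
  rewrite mem_filter ht andbT; apply/allP => y hy; apply/implyP => ty.
  have -> : y = t by apply/eqP; rewrite eq_le ty Ht.
  by rewrite !eqxx implybT.
have Fne : [seq x <- supp s | P x] <> [::] by move=> e; rewrite e in tP.
have [f [+ Hf]] := @exists_seq_min _ _ id Fne.
rewrite mem_filter => /andP [/allP Pf /mem_supp sf].
have Hsg y : in_supp s y -> f <= y -> aparity c y = sigma.
  by move=> /mem_supp /Pf; rewrite /= => + fy; rewrite fy => /andP [/eqP].
exists f, sigma; split => //.
  by move=> s0 y /mem_supp /Pf; rewrite /= s0 eqxx => + fy; rewrite fy => /andP [_ /eqP].
move=> l dl lf Hl; case: (eqVneq sigma 0) => [->|sn0]; [by right|left => sl].
have Pl : P l.
  apply/allP => y /mem_supp hy; apply/implyP => ly; rewrite (negbTE sn0) andbT.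
  case: (ltP y f) => yf; last by rewrite Hsg.
  have -> : y = l by apply/eqP; rewrite eq_le ly Hl.
  by rewrite sl.
by have := Hf l; rewrite mem_filter Pl => /(_ (proj2 (mem_supp _ _) dl)) /=; rewrite leNgt lf.
Qed.

Lemma top_run_no_cross c s f sigma : {homo c : x y / x < y} ->
  (forall a b, (a, b) \in s -> c a = b) -> top_run c s f sigma ->
  forall a b, (a, b) \in s -> (f <= a) = (f <= b).
Proof.
move=> Ic Hc [sf Hsg Hz Hgap] a b h.
have da : in_supp s a by left; exists b.
have db : in_supp s b by right; exists a.
have ab : aparity c b = aparity c a by rewrite -(Hc _ _ h) (aparity_app Ic).
have fixed_eq : aparity c a = 0 -> a = b.
  by rewrite -(Hc _ _ h); case: (aparity_cases c a) => -[e ->] // /eqP; rewrite ?oppr_eq0 oner_eq0.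
(* otherwise the point [l] of [s] just below [f] would lie in the [c]-run of [f] *)
have run_below x : in_supp s x -> x < f -> aparity c a = sigma -> sigma != 0 ->
    (forall l, x <= l < f -> between a (c a) l) -> False.
  move=> dx xf sa sn0 hb; have [l [dl lf Hl]] := exists_max_below dx xf.
  have : aparity c l = sigma by rewrite (aparity_between Ic (hb l _)) ?Hl ?lf.
  by case: (Hgap l dl lf Hl) => // s0; rewrite s0 eqxx in sn0.
case: (leP f a) => fa; case: (leP f b) => fb //; exfalso.
- have sa := Hsg _ da fa; have [s0|sn0] := eqVneq sigma 0.
    by move: fb; rewrite -fixed_eq ?sa // ltNge fa.
  by apply: (run_below b db fb sa sn0) => l /andP [bl lf]; rewrite (Hc _ _ h) betweenP; lra.
- have sa : aparity c a = sigma by rewrite -ab Hsg.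
  have [s0|sn0] := eqVneq sigma 0; first by move: fa; rewrite fixed_eq ?sa // ltNge fb.
  by apply: (run_below a da fa sa sn0) => l /andP [al lf]; rewrite (Hc _ _ h) betweenP; lra.
Qed.

Lemma in_supp_filter_cut s f : (forall a b, (a, b) \in s -> (f <= a) = (f <= b)) -> forall x,
  (in_supp [seq xy <- s | xy.1 < f] x <-> in_supp s x /\ x < f) /\
  (in_supp [seq xy <- s | f <= xy.1] x <-> in_supp s x /\ f <= x).
Proof.
move=> cross x.
have side a b : (a, b) \in s -> (a < f) = (b < f) by move=> hs; rewrite !ltNge (cross _ _ hs).
rewrite /in_supp; split; split.
- case=> -[y]; rewrite mem_filter => /andP [/= h hs].
    by split; [left; exists y|].
  by split; [right; exists y|rewrite -(side _ _ hs)].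
- case=> -[[y hs]|[y hs]] xf; [left|right]; exists y; rewrite mem_filter hs andbT //=.
  by rewrite (side _ _ hs).
- case=> -[y]; rewrite mem_filter => /andP [/= h hs].
    by split; [left; exists y|].
  by split; [right; exists y|rewrite -(cross _ _ hs)].
- case=> -[[y hs]|[y hs]] fx; [left|right]; exists y; rewrite mem_filter hs andbT //=.
  by rewrite (cross _ _ hs).
Qed.

Lemma exists_cut_below s f : exists w, w < f /\ forall x, in_supp s x -> x < f -> x < w.
Proof.
case: (boolP (has (fun x => x < f) (supp s))) => [/hasP [x /mem_supp dx xf]|/hasPn nx].
  have [l [dl lf Hl]] := exists_max_below dx xf.
  exists ((l + f) / 2); split; first lra.
  by move=> y dy yf; have := Hl _ dy yf; lra.
exists (f - 1); split; first lra.
by move=> y /mem_supp /nx /= /negbTE ->.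
Qed.

Lemma top_block_exists c ci s f sigma w U :
  cancel c ci -> cancel ci c -> {homo c : x y / x < y} ->
  ord_pairs s -> (forall a b, (a, b) \in s -> c a = b) -> top_run c s f sigma ->
  w < f -> (forall x, in_supp s x -> x < U) ->
  exists q pi, block c [seq xy <- s | f <= xy.1] w U f sigma q pi /\
    (sigma = 0 -> forall x, DR q x -> pi x = f).
Proof.
move=> K1 K2 Ic Hs Hc run wf HU; have [sf Hsg Hz _] := run.
have cross := top_run_no_cross Ic Hc run.
pose s2 := [seq xy <- s | f <= xy.1].
have supp2 x : in_supp s2 x <-> in_supp s x /\ f <= x := (in_supp_filter_cut cross x).2.
have sub2 : {subset s2 <= s} by move=> xy; rewrite mem_filter => /andP [].
have [s0|sn0] := eqVneq sigma 0.
  have fixed2 a b : (a, b) \in s2 -> a = f /\ b = f.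
    rewrite mem_filter => /andP [/= fa hs].
    by split; apply: Hz => //; [left; exists b|right; exists a|rewrite -(cross _ _ hs)].
  have B := block_fixed (etrans (Hsg _ sf (lexx f)) s0) fixed2 wf (HU _ sf).
  rewrite -s0 in B; exists [fmap].[f <- f], id; split => // _ x.
  by case/DRP => -[b]; rewrite /maps fnd_set fnd_fmap0; case: eqP => // _ [<-].
have [||||q [pi B]] := block_exists K1 K2 Ic (ord_pairsW sub2 Hs) (f := f) (sigma := sigma)
  (m1 := w) (m2 := U) (fun a b h => Hc _ _ (sub2 _ h)).
- by apply/supp2; split.
- by move=> x /supp2 [dx fx]; apply: Hsg.
- exact/eqP.
- by move=> x /supp2 [dx fx]; split; [apply: lt_le_trans fx|apply: HU].
by exists q, pi; split => // s0; rewrite s0 eqxx in sn0.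
Qed.

(* Cut [s] at the start [f] of its top run, solve below recursively and put a
   block on the top run. *)
Lemma solution_exists c ci s : cancel c ci -> cancel ci c -> {homo c : x y / x < y} ->
  ord_pairs s -> (forall a b, (a, b) \in s -> c a = b) ->
  forall U, (forall x, in_supp s x -> x < U) -> exists q ws pi, solution c s U q ws pi.
Proof.
move=> K1 K2 Ic; have [n] := ubnP (size s); elim: n s => // n IH s hsn Hs Hc U HU.
have [->|/eqP sne] := eqVneq s [::]; first by exists [fmap], [::], id; apply: solution_nil.
have [f [sigma run]] := exists_top_run c sne; have [sf Hsg _ Hgap] := run.
have cross := top_run_no_cross Ic Hc run.
pose s1 := [seq xy <- s | xy.1 < f]; pose s2 := [seq xy <- s | f <= xy.1].
have supp1 x : in_supp s1 x <-> in_supp s x /\ x < f := (in_supp_filter_cut cross x).1.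
have supp2 x : in_supp s2 x -> in_supp s x /\ f <= x by move/(in_supp_filter_cut cross x).2.
have s_split a b : (a, b) \in s -> (a, b) \in s1 \/ (a, b) \in s2.
  by move=> h; rewrite !mem_filter h /= !andbT; case: (ltP a f); [left|right].
have sub1 : {subset s1 <= s} by move=> xy; rewrite mem_filter => /andP [].
have hs1n : (size s1 < n)%N.
  rewrite -ltnS; apply: leq_trans hsn; rewrite ltnS /s1.
  case: sf => -[y h]; apply: (size_filter_lt h); rewrite /= -leNgt //.
  by rewrite (cross _ _ h).
have [w [wf Hw]] := exists_cut_below s f.
have HU1 x : in_supp s1 x -> x < w by case/supp1 => dx xf; apply: Hw.
have [q1 [ws1 [pi1 V1]]] := IH s1 hs1n (ord_pairsW sub1 Hs) (fun a b h => Hc _ _ (sub1 _ h)) w HU1.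
have gap1 l : in_supp s1 l -> (forall x, in_supp s1 x -> x <= l) ->
    aparity c l <> sigma \/ sigma = 0.
  by move=> /supp1 [dl lf] Hl; apply: Hgap => // x dx xf; apply/Hl/supp1.
have [q2 [pi2 [B fixed2]]] := top_block_exists K1 K2 Ic Hs Hc run wf HU.
do 3 eexists; apply: solution_glue s_split supp1 supp2 sf (Hsg _ sf (lexx f)) Hsg gap1 fixed2
  wf (HU _ sf) V1 B.
Qed.

(** * Conjugates *)

Lemma is_aut_comp f g : is_aut f -> is_aut g -> is_aut (f \o g).
Proof. by case=> bf If [bg Ig]; split; [apply: bij_comp|move=> x y /Ig /If]. Qed.

Lemma is_aut_can f g : is_aut f -> cancel f g -> cancel g f -> is_aut g.
Proof. by case=> _ If K1 K2; split; [exists f|apply: homo_can K2 If]. Qed.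

Lemma conjugator_of_realization c (q : qpmap) pi :
  (forall x y, DR q x -> DR q y -> x < y -> pi x < pi y) ->
  (forall a b, maps q a b -> pi b = c (pi a)) ->
  exists rho rhoi, [/\ is_aut rho, cancel rho rhoi, cancel rhoi rho
    & forall a b, maps q a b -> rho (c (rhoi a)) = b].
Proof.
move=> P1 P2.
have DR_supp x : x \in supp (graph_of q) -> DR q x.
  by case/mem_supp => -[y /graph_ofP h]; [apply: DR_dom h|apply: DR_rng h].
pose T := [seq (pi x, x) | x <- supp (graph_of q)].
have memT a b : (a, b) \in T -> DR q b /\ a = pi b.
  by case/mapP => x /DR_supp dx [-> ->].
have HT : ord_pairs T.
  apply: ord_pairs_strict => a b a' b' /memT [h1 ->] /memT [h2 ->] ab; last exact: P1.
  rewrite ltNge le_eqVlt; apply/negP => /orP [/eqP e|h]; first by rewrite e ltxx in ab.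
  by have := P1 _ _ h2 h1 h; rewrite ltNge (ltW ab).
have [rho [rhoi [R1 R2 RI RE]]] := ord_pairs_extend HT.
have Rpi x : DR q x -> rho (pi x) = x.
  move=> dx; apply: RE; apply/mapP; exists x => //; apply/mem_supp.
  by case/DRP: dx => -[y h]; [left|right]; exists y; apply/graph_ofP.
exists rho, rhoi; split => //; first by split => //; exists rhoi.
move=> a b h; have ea : rhoi a = pi a by rewrite -{1}(Rpi a (DR_dom h)) R1.
by rewrite ea -(P2 _ _ h) Rpi //; apply: DR_rng h.
Qed.

Lemma good_conj_extension c p : is_aut c -> pisom p -> (forall a b, maps p a b -> c a = b) ->
  exists q, [/\ good q, extends q p & exists rho rhoi, [/\ is_aut rho, cancel rho rhoi,
    cancel rhoi rho & forall a b, maps q a b -> rho (c (rhoi a)) = b]].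
Proof.
case=> -[ci K1 K2] Ic H Hc.
have Hc' a b : (a, b) \in graph_of p -> c a = b by move/graph_ofP; apply: Hc.
have [U HU] : exists U, forall x, in_supp (graph_of p) x -> x < U.
  have [e|ne] := eqVneq (supp (graph_of p)) [::].
    by exists 0 => x /mem_supp; rewrite e.
  have [m [_ Hm]] := @exists_seq_max _ _ id (elimN eqP ne).
  by exists (m + 1) => x /mem_supp /Hm /= h; apply: le_lt_trans h _; rewrite ltrDl.
have [q [ws [pi V]]] := solution_exists K1 K2 Ic (graph_of_ord_pairs H) Hc' HU.
exists q; split; first exact: solution_good V.
  by move=> a b /graph_ofP; apply: (sol_ext V).
exact: conjugator_of_realization (sol_homo V) (sol_equiv V).
Qed.

Lemma conj_in_Pgamma gamma sigma tau q :
  is_aut gamma -> is_aut sigma -> cancel sigma tau -> cancel tau sigma -> pisom q ->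
  (forall a b, maps q a b -> sigma (gamma (tau a)) = b) -> in_Pgamma gamma q.
Proof.
move=> Ag As K1 K2 H Hq; split => //; exists (sigma \o gamma \o tau); split => //.
split; first by apply: is_aut_comp; [exact: is_aut_comp|exact: is_aut_can As K1 K2].
by move=> F; exists sigma, tau.
Qed.

Lemma in_Pgamma_conj gamma p : in_Pgamma gamma p ->
  exists sigma tau, [/\ is_aut sigma, cancel sigma tau, cancel tau sigma
    & forall a b, maps p a b -> sigma (gamma (tau a)) = b].
Proof.
case=> _ [h [[_ Hcl] Hph]].
have [sigma [tau [As [K1 [K2 Hst]]]]] := Hcl [seq xy.1 | xy <- graph_of p].
exists sigma, tau; split => // a b hab; rewrite Hst; first exact: Hph.
by apply/mapP; exists (a, b) => //; apply/graph_ofP.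
Qed.

Theorem lemma4p3 :
  (forall p : qpmap, pisom p -> exists q, good q /\ extends q p)
  /\
  (forall gamma : rat -> rat, is_aut gamma ->
     forall p : qpmap, in_Pgamma gamma p ->
       exists q, good q /\ in_Pgamma gamma q /\ extends q p).
Proof.
split.
  move=> p H; have [c [ci [K1 K2 Ic Ext]]] := ord_pairs_extend (graph_of_ord_pairs H).
  have Ac : is_aut c by split; [exists ci|].
  have [q [Gq Xq _]] := good_conj_extension Ac H (fun a b h => Ext _ _ (proj2 (graph_ofP _ _ _) h)).
  by exists q.
move=> gamma Ag p Pp; have [sigma [tau [As K1 K2 Hst]]] := in_Pgamma_conj Pp.
have Ac : is_aut (sigma \o gamma \o tau).
  by apply: is_aut_comp; [exact: is_aut_comp|exact: is_aut_can As K1 K2].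
have [q [Gq Xq [rho [rhoi [Ar R1 R2 Hq]]]]] := good_conj_extension Ac Pp.1 Hst.
exists q; split => //; split => //.
apply: (@conj_in_Pgamma gamma (rho \o sigma) (tau \o rhoi)) => //; first exact: is_aut_comp.
- by move=> x /=; rewrite R1 K1.
- by move=> x /=; rewrite K2 R2.
- by case: Gq.
Qed.
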